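(* Fix $A\in\mathbb R$ and $T>0$. There is $C=C(A,T)$, not depending on $\epsilon$, such that for all sufficiently small $\epsilon>0$, all $0\le s<t\le\epsilon^{-2}T$, all $x,y\in\mathbb Z_{\ge0}$ and all $v\in[0,1]$, $$|\mathbf p_t^R(x,y)-\mathbf p_s^R(x,y)|\le C\,(1\wedge s^{-1/2-v})\,(t-s)^v.$$
   Context: Let $p_t(x)$, $x\in\mathbb Z$, denote the whole-line semi-discrete heat kernel, i.e. the solution of $\partial_tp_t(x)=\frac12\Delta p_t(x)$, $p_0(x)=1_{\{x=0\}}$, where $\Delta f(x)=f(x+1)+f(x-1)-2f(x)$. For $\epsilon>0$ let $\mu_A=1-A\epsilon$. The half-line Robin heat kernel is, for $t\ge0$ and $x,y\in\mathbb Z_{\ge0}$, $$\mathbf p_t^R(x,y)=p_t(x-y)+\mu_Ap_t(x+y+1)+(1-\mu_A^{-2})\sum_{z=2}^\infty p_t(x+y+z)\mu_A^z.$$ *)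

From Stdlib Require Import Reals Lra ZArith ClassicalEpsilon.
Open Scope R_scope.

(* The value of a convergent series sum_{n>=0} u n (chosen classically;
   all series used below converge). *)
Definition series (u : nat -> R) : R :=
  epsilon (inhabits 0) (fun l => infinite_sum u l).

(* Whole-line semi-discrete heat kernel, solution of
   d/dt p_t(x) = 1/2 (p_t(x+1)+p_t(x-1)-2p_t(x)), p_0(x) = 1_{x=0}:
   p_t(x) = e^{-t} I_{|x|}(t) = e^{-t} sum_k (t/2)^(2k+|x|) / (k! (k+|x|)!). *)
Definition hk (t : R) (x : Z) : R :=
  exp (- t) *
  series (fun k => (t / 2) ^ (2 * k + Z.abs_nat x) /
                   (INR (fact k) * INR (fact (k + Z.abs_nat x)))).

Definition muA (A eps : R) : R := 1 - A * eps.

Definition robin (A eps t : R) (x y : nat) : R :=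
  let mu := muA A eps in
  let X := Z.of_nat x in
  let Y := Z.of_nat y in
  hk t (X - Y)%Z + mu * hk t (X + Y + 1)%Z
  + (1 - / (mu ^ 2)) *
    series (fun n => hk t (X + Y + Z.of_nat (n + 2))%Z * mu ^ (n + 2)).

(* 1 ∧ s^(-1/2 - v), with the convention s^(negative) = +infinity at s = 0. *)
Definition min1_pow (s v : R) : R :=
  if Rle_dec s 0 then 1 else Rmin 1 (Rpower s (- (1/2) - v)).

(* The heat kernel is the law of the difference of two independent Poisson variables of mean
   [l = t/2]: [p_t(a) = sum_k q_k q_(k+a)] with [q] the Poisson weights.  Summing [|q_(k+1) - q_k|]
   against the Poisson variance gives [sup_k q_k <= l^(-1/2)], and the same for second differences
   gives [sup_k |q_(k+1) - q_k| <= 2/l]; hence [p_t <= min(1, C t^(-1/2))] and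
   [|d/dt p_t| <= min(1, C t^(-3/2))], and the mean value theorem interpolates these into the
   Hölder bound.  The Robin kernel adds [(mu^2 - 1) G_t] with [G_t = sum_n p_t(x+y+2+n) mu^n].
   Comparing with the generating function [sum_b p_t(b) nu^b = exp (l (nu - 1)^2 / nu)] bounds [G]
   uniformly for [t <= T eps^(-2)] since [mu - 1 = -A eps]; the heat equation gives
   [2 G' = (mu-1)^2/mu G + p(x+y+1) - p(x+y+2)/mu].  The prefactor [mu^2 - 1 = O(eps)] and
   [eps <= sqrt(T/t)] then yield the same two decay bounds for the Robin correction. *)

From Stdlib Require Import Reals Lra Lia ZArith ClassicalEpsilon Ranalysis5.
From Coquelicot Require Import Coquelicot.
Open Scope R_scope.

Lemma exp_le x y : x <= y -> exp x <= exp y.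
Proof. intros [Hlt|Heq]; [left; apply exp_increasing, Hlt|rewrite Heq; apply Rle_refl]. Qed.

Lemma Rabs_minus_le_sum x y : Rabs (x - y) <= Rabs x + Rabs y.
Proof. unfold Rminus. rewrite <- (Rabs_Ropp y). apply Rabs_triang. Qed.

Lemma series_Series (u : nat -> R) : ex_series u -> series u = Series u.
Proof.
  intros Hu. unfold series.
  assert (Hl : exists l, infinite_sum u l).
  { exists (Series u). apply is_series_Reals, Series_correct, Hu. }
  symmetry. apply is_series_unique, is_series_Reals.
  exact (epsilon_spec (inhabits 0) (fun l => infinite_sum u l) Hl).
Qed.

(* Instances on [R] of Coquelicot's lemmas about [NormedModule] operations, so that [apply]
   unifies them with [+], [-], [*]. *)
Lemma ex_series_Rplus (a b : nat -> R) :
  ex_series a -> ex_series b -> ex_series (fun n => a n + b n).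
Proof. apply (ex_series_plus a b). Qed.

Lemma ex_series_Rminus (a b : nat -> R) :
  ex_series a -> ex_series b -> ex_series (fun n => a n - b n).
Proof. apply (ex_series_minus a b). Qed.

Lemma ex_series_Rmult_l (c : R) (a : nat -> R) :
  ex_series a -> ex_series (fun n => c * a n).
Proof. apply (ex_series_scal_l c a). Qed.

Lemma ex_series_Rext (a b : nat -> R) : (forall n, a n = b n) -> ex_series a -> ex_series b.
Proof. apply (ex_series_ext a b). Qed.

Lemma ex_series_Rle (a b : nat -> R) :
  (forall n, Rabs (a n) <= b n) -> ex_series b -> ex_series a.
Proof. apply (ex_series_le a b). Qed.

Lemma ex_series_Rabs_le (a b : nat -> R) :
  (forall n, Rabs (a n) <= b n) -> ex_series b -> ex_series (fun n => Rabs (a n)).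
Proof.
  intros Hab Hb. apply (ex_series_Rle _ b); trivial.
  intros n. rewrite Rabs_Rabsolu. apply Hab.
Qed.

Lemma ex_series_shift (a : nat -> R) k : ex_series a -> ex_series (fun n => a (k + n)%nat).
Proof. apply (ex_series_incr_n a k). Qed.

Lemma ex_series_geom_bound (a : nat -> R) C r :
  0 <= r < 1 -> (forall n, Rabs (a n) <= C * r ^ n) -> ex_series a.
Proof.
  intros Hr Ha. apply (ex_series_Rle _ _ Ha), ex_series_Rmult_l, ex_series_geom.
  rewrite Rabs_pos_eq; lra.
Qed.

Lemma Series_ge0 (a : nat -> R) : ex_series a -> (forall n, 0 <= a n) -> 0 <= Series a.
Proof.
  intros Ha Hpos.
  replace 0 with (Series (fun n => 0 * a n)) by (rewrite Series_scal_l; ring).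
  apply Series_le; trivial. intros n. specialize (Hpos n). lra.
Qed.

Lemma partial_sum_le_Series (a : nat -> R) N :
  ex_series a -> (forall n, 0 <= a n) -> sum_f_R0 a N <= Series a.
Proof.
  intros Ha Hpos. rewrite (Series_incr_n a (S N)); [|lia|trivial]. simpl pred.
  assert (0 <= Series (fun k => a (S N + k)%nat)).
  { apply Series_ge0; auto. apply ex_series_shift, Ha. }
  lra.
Qed.

Lemma term_le_Series (a : nat -> R) N :
  ex_series a -> (forall n, 0 <= a n) -> a N <= Series a.
Proof.
  intros Ha Hpos. eapply Rle_trans; [|apply (partial_sum_le_Series a N Ha Hpos)].
  destruct N; simpl; [lra|]. pose proof (cond_pos_sum a N Hpos). lra.
Qed.

Lemma Series_shift_le (a : nat -> R) k :
  ex_series a -> (forall n, 0 <= a n) -> Series (fun n => a (k + n)%nat) <= Series a.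
Proof.
  intros Ha Hpos. destruct k as [|k].
  - right. apply Series_ext. reflexivity.
  - rewrite (Series_incr_n a (S k)); [|lia|trivial]. simpl pred.
    pose proof (cond_pos_sum a k Hpos). lra.
Qed.

Lemma Series_le_of_partial_sums (a : nat -> R) B :
  ex_series a -> (forall N, sum_f_R0 a N <= B) -> Series a <= B.
Proof.
  intros Ha HB. pose proof (Series_correct a Ha) as Hlim. apply is_series_Reals in Hlim.
  destruct (Rle_dec (Series a) B) as [|Hgt]; trivial. exfalso.
  destruct (Hlim (Series a - B)) as [N HN]; [lra|].
  specialize (HN N (le_n _)). specialize (HB N). unfold R_dist in HN.
  apply Rabs_def2 in HN. lra.
Qed.

Lemma Rabs_Series_le (a b : nat -> R) :
  (forall n, Rabs (a n) <= b n) -> ex_series b -> Rabs (Series a) <= Series b.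
Proof.
  intros Hab Hb. eapply Rle_trans.
  - apply Series_Rabs, (ex_series_Rabs_le _ _ Hab Hb).
  - apply Series_le; trivial. intros n. split; [apply Rabs_pos|apply Hab].
Qed.

Lemma Series_telescope (u : nat -> R) k : is_lim_seq u 0 ->
  Series (fun j => u (k + j)%nat - u (S (k + j))) = u k.
Proof.
  intros Hu. apply is_lim_seq_Reals in Hu. apply is_series_unique, is_series_Reals.
  assert (Hsum : forall n,
    sum_f_R0 (fun j => u (k + j)%nat - u (S (k + j))) n = u k - u (S (k + n))).
  { induction n as [|n IH]; simpl.
    - rewrite Nat.add_0_r. lra.
    - rewrite IH, Nat.add_succ_r. lra. }
  intros e He. destruct (Hu e He) as [N HN]. exists N. intros n Hn.
  unfold R_dist in *. rewrite Hsum.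
  specialize (HN (S (k + n)) ltac:(lia)). rewrite Rminus_0_r in HN.
  replace (u k - u (S (k + n)) - u k) with (- u (S (k + n))) by ring.
  rewrite Rabs_Ropp. exact HN.
Qed.

Lemma is_series_exp x : is_series (fun i => / INR (fact i) * x ^ i) (exp x).
Proof. apply is_series_Reals. exact (proj2_sig (exist_exp x)). Qed.

Lemma pow_div_fact_le_exp x j : 0 <= x -> x ^ j / INR (fact j) <= exp x.
Proof.
  intros Hx. eapply Rle_trans; [|apply (exp_ge_taylor x j Hx)].
  assert (Hpos : forall k, 0 <= x ^ k / INR (fact k)).
  { intros k. apply Rmult_le_pos; [apply pow_le, Hx|].
    left. apply Rinv_0_lt_compat, INR_fact_lt_0. }
  destruct j as [|j]; [apply Rle_refl|]. simpl sum_f_R0.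
  pose proof (cond_pos_sum _ j Hpos) as Hj. simpl in Hj |- *. lra.
Qed.

Lemma Rabs_le_Series_Rabs_diff (u : nat -> R) k :
  is_lim_seq u 0 -> ex_series (fun j => Rabs (u (S j) - u j)) ->
  Rabs (u k) <= Series (fun j => Rabs (u (S j) - u j)).
Proof.
  intros Hu Hsum. rewrite <- (Series_telescope u k Hu).
  eapply Rle_trans.
  - apply (Rabs_Series_le _ (fun j => Rabs (u (S (k + j)) - u (k + j)%nat))).
    + intros j. rewrite <- Rabs_Ropp. right. f_equal. ring.
    + apply (ex_series_shift (fun j => Rabs (u (S j) - u j)) k Hsum).
  - apply (Series_shift_le (fun j => Rabs (u (S j) - u j))); trivial.
    intros j. apply Rabs_pos.
Qed.

Lemma Rabs_Series_prod_shift_le (f g : nat -> R) a B1 B2 :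
  (forall k, Rabs (f k) <= B1) -> ex_series (fun k => Rabs (g k)) ->
  Series (fun k => Rabs (g k)) <= B2 -> Rabs (Series (fun k => f k * g (k + a)%nat)) <= B1 * B2.
Proof.
  intros Hf Hg HB2. assert (HB1 : 0 <= B1) by (eapply Rle_trans; [apply Rabs_pos|apply (Hf O)]).
  assert (Eg : ex_series (fun k => Rabs (g (a + k)%nat)))
    by apply (ex_series_shift (fun k => Rabs (g k)) a Hg).
  eapply Rle_trans.
  - apply (Rabs_Series_le _ (fun k => B1 * Rabs (g (a + k)%nat))).
    + intros k. rewrite Rabs_mult, Nat.add_comm.
      apply Rmult_le_compat_r; [apply Rabs_pos|apply Hf].
    + apply ex_series_Rmult_l, Eg.
  - rewrite Series_scal_l. apply Rmult_le_compat_l; trivial.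
    eapply Rle_trans; [|exact HB2].
    apply (Series_shift_le (fun k => Rabs (g k))); trivial. intros k. apply Rabs_pos.
Qed.

Lemma Rabs_prod_shift_le_geom (f g : nat -> R) C1 C2 k a : 0 <= C2 ->
  Rabs (f k) <= C1 * (/ 4) ^ k -> Rabs (g (k + a)%nat) <= C2 * (/ 4) ^ (k + a) ->
  Rabs (f k * g (k + a)%nat) <= C1 * C2 * (/ 4) ^ a * (/ 4) ^ k.
Proof.
  intros HC2 Hf Hg. rewrite pow_add in Hg. rewrite Rabs_mult.
  set (u := (/ 4) ^ k) in *. set (w := (/ 4) ^ a) in *.
  assert (Hu : 0 <= u <= 1) by (split; [apply pow_le|rewrite <- (pow1 k); apply pow_incr]; lra).
  assert (Hw : 0 <= w) by (apply pow_le; lra).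
  assert (HC1 : 0 <= C1 * u) by (eapply Rle_trans; [apply Rabs_pos|exact Hf]).
  apply Rle_trans with ((C1 * u) * (C2 * w * u)).
  - replace (C2 * w * u) with (C2 * (u * w)) by ring.
    apply Rmult_le_compat; trivial; apply Rabs_pos.
  - replace (C1 * C2 * w * u) with ((C1 * u) * (C2 * w * 1)) by ring.
    apply Rmult_le_compat_l; trivial. apply Rmult_le_compat_l; [|lra].
    apply Rmult_le_pos; trivial.
Qed.

Lemma ex_series_prod_shift_geom (f g : nat -> R) C1 C2 a : 0 <= C2 ->
  (forall k, Rabs (f k) <= C1 * (/ 4) ^ k) -> (forall k, Rabs (g k) <= C2 * (/ 4) ^ k) ->
  ex_series (fun k => f k * g (k + a)%nat).
Proof.
  intros HC2 Hf Hg. apply (ex_series_geom_bound _ (C1 * C2 * (/ 4) ^ a) (/ 4)); [lra|].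
  intros k. apply Rabs_prod_shift_le_geom; trivial.
Qed.

(** * Poisson weights *)

Definition poisson (l : R) (k : nat) : R := exp (- l) * l ^ k / INR (fact k).

Lemma poisson_ge0 l k : 0 <= l -> 0 <= poisson l k.
Proof.
  intros Hl. unfold poisson. apply Rmult_le_pos.
  - apply Rmult_le_pos; [left; apply exp_pos|apply pow_le, Hl].
  - left. apply Rinv_0_lt_compat, INR_fact_lt_0.
Qed.

Lemma poisson_0 l : poisson l 0 = exp (- l).
Proof. unfold poisson. simpl. field. Qed.

Lemma poisson_succ l k : INR (S k) * poisson l (S k) = l * poisson l k.
Proof.
  unfold poisson. rewrite fact_simpl, mult_INR. simpl pow.
  pose proof (INR_fact_lt_0 k). pose proof (lt_0_INR (S k) ltac:(lia)).
  field. lra.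
Qed.

Lemma poisson_pred l k : 0 < l -> poisson l k = INR (S k) * poisson l (S k) / l.
Proof. intros Hl. rewrite poisson_succ. field. lra. Qed.

(* Also for [l < 0]: the series in [t] are differentiated under domination on all of [|t| < r]. *)
Lemma Rabs_poisson_le l k : Rabs (poisson l k) <= exp (5 * Rabs l) * (/ 4) ^ k.
Proof.
  assert (Hexp : exp (- l) <= exp (Rabs l)).
  { apply exp_le. rewrite <- Rabs_Ropp. apply Rle_abs. }
  assert (Hpow : Rabs l ^ k / INR (fact k) <= exp (4 * Rabs l) * (/ 4) ^ k).
  { pose proof (pow_div_fact_le_exp (4 * Rabs l) k ltac:(pose proof (Rabs_pos l); lra)) as H.
    rewrite Rpow_mult_distr in H. rewrite pow_inv.
    assert (0 < 4 ^ k) by (apply pow_lt; lra).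
    apply (Rmult_le_reg_r (4 ^ k)); trivial.
    replace (exp (4 * Rabs l) * / 4 ^ k * 4 ^ k) with (exp (4 * Rabs l)) by (field; lra).
    replace (Rabs l ^ k / INR (fact k) * 4 ^ k) with (4 ^ k * Rabs l ^ k / INR (fact k))
      by (unfold Rdiv; ring).
    exact H. }
  unfold Rdiv in Hpow. unfold poisson, Rdiv. pose proof (INR_fact_lt_0 k).
  rewrite !Rabs_mult, Rabs_inv, <- RPow_abs, (Rabs_pos_eq (exp _)), (Rabs_pos_eq (INR _))
    by (try left; try apply exp_pos; lra).
  replace (5 * Rabs l) with (Rabs l + 4 * Rabs l) by ring. rewrite exp_plus.
  apply Rle_trans with (exp (Rabs l) * (exp (4 * Rabs l) * (/ 4) ^ k)); [|right; ring].
  rewrite Rmult_assoc. apply Rmult_le_compat; trivial.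
  - left. apply exp_pos.
  - apply Rmult_le_pos; [apply pow_le, Rabs_pos|left; apply Rinv_0_lt_compat; lra].
Qed.

Lemma ex_series_poisson l : ex_series (poisson l).
Proof.
  apply (ex_series_geom_bound _ (exp (5 * Rabs l)) (/ 4)); [lra|apply Rabs_poisson_le].
Qed.

Lemma poisson_pow_eq l x k :
  poisson l k * x ^ k = exp (- l) * (/ INR (fact k) * (l * x) ^ k).
Proof. unfold poisson. rewrite Rpow_mult_distr. unfold Rdiv. ring. Qed.

Lemma ex_series_poisson_pow l x : ex_series (fun k => poisson l k * x ^ k).
Proof.
  apply (ex_series_Rext (fun k => exp (- l) * (/ INR (fact k) * (l * x) ^ k))).
  - intros k. symmetry. apply poisson_pow_eq.
  - apply ex_series_Rmult_l. eexists. apply is_series_exp.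
Qed.

Lemma Series_poisson_pow l x :
  Series (fun k => poisson l k * x ^ k) = exp (- l) * exp (l * x).
Proof.
  rewrite (Series_ext _ _ (poisson_pow_eq l x)), Series_scal_l.
  f_equal. apply is_series_unique, is_series_exp.
Qed.

Lemma Series_poisson l : Series (poisson l) = 1.
Proof.
  transitivity (Series (fun k => poisson l k * 1 ^ k)).
  - apply Series_ext. intros k. rewrite pow1. ring.
  - rewrite Series_poisson_pow, <- exp_plus, Rmult_1_r, Rplus_opp_l. apply exp_0.
Qed.

Lemma poisson_le_1 l k : 0 <= l -> poisson l k <= 1.
Proof.
  intros Hl. rewrite <- (Series_poisson l).
  apply term_le_Series; [apply ex_series_poisson|intros; apply poisson_ge0, Hl].
Qed.

Lemma ex_series_poisson_mean l : ex_series (fun j => INR j * poisson l j).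
Proof.
  apply ex_series_incr_1, (ex_series_Rext (fun j => l * poisson l j)).
  - intros j. symmetry. apply poisson_succ.
  - apply ex_series_Rmult_l, ex_series_poisson.
Qed.

Lemma Series_poisson_mean l : Series (fun j => INR j * poisson l j) = l.
Proof.
  rewrite Series_incr_1 by apply ex_series_poisson_mean.
  rewrite (Series_ext _ _ (poisson_succ l)), Series_scal_l, Series_poisson. simpl. ring.
Qed.

Lemma poisson_second_moment_succ l j :
  INR (S j) ^ 2 * poisson l (S j) = l * (INR j * poisson l j) + l * poisson l j.
Proof.
  replace (INR (S j) ^ 2 * poisson l (S j)) with (INR (S j) * (INR (S j) * poisson l (S j)))
    by ring.
  rewrite poisson_succ, S_INR. ring.
Qed.

Lemma ex_series_poisson_second_moment l : ex_series (fun j => INR j ^ 2 * poisson l j).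
Proof.
  apply ex_series_incr_1.
  apply (ex_series_Rext _ _ (fun j => eq_sym (poisson_second_moment_succ l j))).
  apply ex_series_Rplus; apply ex_series_Rmult_l;
    [apply ex_series_poisson_mean|apply ex_series_poisson].
Qed.

Lemma Series_poisson_second_moment l : Series (fun j => INR j ^ 2 * poisson l j) = l * l + l.
Proof.
  rewrite Series_incr_1 by apply ex_series_poisson_second_moment.
  rewrite (Series_ext _ _ (poisson_second_moment_succ l)), Series_plus, !Series_scal_l.
  - rewrite Series_poisson_mean, Series_poisson. simpl. ring.
  - apply ex_series_Rmult_l, ex_series_poisson_mean.
  - apply ex_series_Rmult_l, ex_series_poisson.
Qed.

Lemma poisson_variance_eq l j : poisson l j * (INR j - l) ^ 2 =
  (INR j ^ 2 * poisson l j + (-2 * l) * (INR j * poisson l j)) + (l * l) * poisson l j.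
Proof. ring. Qed.

Lemma ex_series_poisson_variance l : ex_series (fun j => poisson l j * (INR j - l) ^ 2).
Proof.
  apply (ex_series_Rext _ _ (fun j => eq_sym (poisson_variance_eq l j))).
  apply ex_series_Rplus; [apply ex_series_Rplus|]; try apply ex_series_Rmult_l.
  - apply ex_series_poisson_second_moment.
  - apply ex_series_poisson_mean.
  - apply ex_series_poisson.
Qed.

Lemma Series_poisson_variance l : Series (fun j => poisson l j * (INR j - l) ^ 2) = l.
Proof.
  rewrite (Series_ext _ _ (poisson_variance_eq l)), !Series_plus, !Series_scal_l.
  - rewrite Series_poisson_second_moment, Series_poisson_mean, Series_poisson. ring.
  - apply ex_series_poisson_second_moment.
  - apply ex_series_Rmult_l, ex_series_poisson_mean.
  - apply ex_series_Rplus;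
      [apply ex_series_poisson_second_moment|apply ex_series_Rmult_l, ex_series_poisson_mean].
  - apply ex_series_Rmult_l, ex_series_poisson.
Qed.

Lemma Series_poisson_variance_shift_le l k : 0 <= l ->
  Series (fun j => poisson l (k + j) * (INR (k + j) - l) ^ 2) <= l.
Proof.
  intros Hl. eapply Rle_trans; [|right; apply (Series_poisson_variance l)].
  apply (Series_shift_le (fun j => poisson l j * (INR j - l) ^ 2)).
  - apply ex_series_poisson_variance.
  - intros j. apply Rmult_le_pos; [apply poisson_ge0, Hl|apply pow2_ge_0].
Qed.

Lemma Series_poisson_shift_le l k : 0 <= l -> Series (fun j => poisson l (k + j)) <= 1.
Proof.
  intros Hl. rewrite <- (Series_poisson l).
  apply Series_shift_le; [apply ex_series_poisson|intros; apply poisson_ge0, Hl].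
Qed.

Definition poisson_diff (l : R) (k : nat) : R := poisson l (S k) - poisson l k.

Definition poisson_diff2 (l : R) (k : nat) : R := poisson_diff l (S k) - poisson_diff l k.

Lemma Rabs_le_amgm x s : 0 < s -> Rabs x <= x ^ 2 / (2 * s) + s / 2.
Proof.
  intros Hs. apply (Rmult_le_reg_l (2 * s)); [lra|].
  replace (2 * s * (x ^ 2 / (2 * s) + s / 2)) with (Rabs x ^ 2 + s ^ 2)
    by (rewrite pow2_abs; field; lra).
  pose proof (pow2_ge_0 (Rabs x - s)). nra.
Qed.

Lemma Rabs_poisson_diff_le l k : 0 < l ->
  Rabs (poisson_diff l k) <=
  / (2 * sqrt l * l) * (poisson l (S k) * (INR (S k) - l) ^ 2)
  + sqrt l / (2 * l) * poisson l (S k).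
Proof.
  intros Hl. pose proof (sqrt_lt_R0 l Hl) as Hsl. pose proof (poisson_ge0 l (S k) ltac:(lra)).
  unfold poisson_diff. rewrite (poisson_pred l k Hl).
  replace (poisson l (S k) - INR (S k) * poisson l (S k) / l)
    with (poisson l (S k) * / l * (l - INR (S k))) by (field; lra).
  rewrite Rabs_mult, Rabs_pos_eq
    by (apply Rmult_le_pos; [|left; apply Rinv_0_lt_compat]; lra).
  eapply Rle_trans.
  - apply Rmult_le_compat_l; [apply Rmult_le_pos; [|left; apply Rinv_0_lt_compat]; lra|].
    apply (Rabs_le_amgm _ _ Hsl).
  - right. field. lra.
Qed.

Lemma Rabs_poisson_diff_le_sum l k : 0 <= l ->
  Rabs (poisson_diff l k) <= poisson l (S k) + poisson l k.
Proof.
  intros Hl. unfold poisson_diff.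
  pose proof (poisson_ge0 l k Hl). pose proof (poisson_ge0 l (S k) Hl).
  apply Rabs_le. lra.
Qed.

Lemma ex_series_Rabs_poisson_diff l : 0 <= l -> ex_series (fun k => Rabs (poisson_diff l k)).
Proof.
  intros Hl. apply (ex_series_Rabs_le _ _ (fun k => Rabs_poisson_diff_le_sum l k Hl)).
  apply ex_series_Rplus; [apply (ex_series_incr_1 (poisson l))|]; apply ex_series_poisson.
Qed.

Lemma Series_Rabs_poisson_diff_le_2 l : 0 <= l -> Series (fun k => Rabs (poisson_diff l k)) <= 2.
Proof.
  intros Hl. pose proof (Series_poisson_shift_le l 1 Hl) as H1. cbn [Nat.add] in H1.
  assert (E1 : ex_series (fun k => poisson l (S k)))
    by apply (ex_series_incr_1 (poisson l)), ex_series_poisson.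
  eapply Rle_trans.
  - apply (Series_le _ (fun k => poisson l (S k) + poisson l k)).
    + intros k. split; [apply Rabs_pos|apply Rabs_poisson_diff_le_sum, Hl].
    + apply ex_series_Rplus; [exact E1|apply ex_series_poisson].
  - rewrite Series_plus, Series_poisson by (trivial; apply ex_series_poisson). lra.
Qed.

Lemma Series_Rabs_poisson_diff_le l : 0 < l ->
  Series (fun k => Rabs (poisson_diff l k)) <= / sqrt l.
Proof.
  intros Hl. pose proof (sqrt_lt_R0 l Hl) as Hsl.
  pose proof (Series_poisson_variance_shift_le l 1 ltac:(lra)) as Hvar.
  pose proof (Series_poisson_shift_le l 1 ltac:(lra)) as Hmass. cbn [Nat.add] in Hvar, Hmass.
  assert (Evar : ex_series (fun k => poisson l (S k) * (INR (S k) - l) ^ 2))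
    by apply (ex_series_incr_1 (fun j => poisson l j * (INR j - l) ^ 2)),
         ex_series_poisson_variance.
  assert (Emass : ex_series (fun k => poisson l (S k)))
    by apply (ex_series_incr_1 (poisson l)), ex_series_poisson.
  assert (Ha : 0 < / (2 * sqrt l * l)) by (apply Rinv_0_lt_compat; nra).
  assert (Hb : 0 < sqrt l / (2 * l)) by (apply Rdiv_lt_0_compat; lra).
  eapply Rle_trans.
  - apply Series_le.
    + intros k. split; [apply Rabs_pos|apply (Rabs_poisson_diff_le l k Hl)].
    + apply ex_series_Rplus; apply ex_series_Rmult_l; assumption.
  - rewrite Series_plus, !Series_scal_l by (apply ex_series_Rmult_l; assumption).
    apply Rle_trans with (/ (2 * sqrt l * l) * l + sqrt l / (2 * l) * 1).
    + apply Rplus_le_compat; apply Rmult_le_compat_l; lra.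
    + right. pose proof (sqrt_sqrt l ltac:(lra)) as Hsq.
      set (r := sqrt l) in *. rewrite <- Hsq. field. lra.
Qed.

Lemma poisson_le_inv_sqrt l k : 0 < l -> poisson l k <= / sqrt l.
Proof.
  intros Hl. eapply Rle_trans; [apply Rle_abs|].
  eapply Rle_trans; [|apply (Series_Rabs_poisson_diff_le l Hl)].
  apply (Rabs_le_Series_Rabs_diff (poisson l)).
  - apply ex_series_lim_0, ex_series_poisson.
  - apply ex_series_Rabs_poisson_diff. lra.
Qed.

Lemma poisson_diff2_eq l k : 0 < l ->
  poisson_diff2 l k = poisson l (S (S k)) * (INR (S (S k)) - l) ^ 2 / l ^ 2 - poisson l (S k) / l.
Proof.
  intros Hl. unfold poisson_diff2, poisson_diff.
  rewrite (poisson_pred l k Hl), (poisson_pred l (S k) Hl), !S_INR. field. lra.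
Qed.

Lemma Rabs_poisson_diff2_le l k : 0 < l ->
  Rabs (poisson_diff2 l k) <=
  / l ^ 2 * (poisson l (S (S k)) * (INR (S (S k)) - l) ^ 2) + / l * poisson l (S k).
Proof.
  intros Hl. rewrite (poisson_diff2_eq l k Hl).
  assert (0 <= poisson l (S (S k)) * (INR (S (S k)) - l) ^ 2 / l ^ 2).
  { apply Rmult_le_pos; [apply Rmult_le_pos; [apply poisson_ge0; lra|apply pow2_ge_0]|].
    left. apply Rinv_0_lt_compat, pow_lt, Hl. }
  assert (0 <= poisson l (S k) / l).
  { apply Rmult_le_pos; [apply poisson_ge0; lra|left; apply Rinv_0_lt_compat, Hl]. }
  apply Rabs_le. unfold Rdiv in *. lra.
Qed.

Lemma ex_series_Rabs_poisson_diff2 l : 0 <= l -> ex_series (fun k => Rabs (poisson_diff2 l k)).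
Proof.
  intros Hl.
  apply (ex_series_Rabs_le _ (fun k => Rabs (poisson_diff l (S k)) + Rabs (poisson_diff l k))).
  - intros k. apply Rabs_minus_le_sum.
  - pose proof (ex_series_Rabs_poisson_diff l Hl) as E.
    apply ex_series_Rplus; [apply (ex_series_incr_1 (fun k => Rabs (poisson_diff l k)))|]; exact E.
Qed.

Lemma Series_Rabs_poisson_diff2_le l : 0 < l ->
  Series (fun k => Rabs (poisson_diff2 l k)) <= 2 / l.
Proof.
  intros Hl.
  pose proof (Series_poisson_variance_shift_le l 2 ltac:(lra)) as Hvar.
  pose proof (Series_poisson_shift_le l 1 ltac:(lra)) as Hmass. cbn [Nat.add] in Hvar, Hmass.
  assert (Evar : ex_series (fun k => poisson l (S (S k)) * (INR (S (S k)) - l) ^ 2))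
    by apply (ex_series_incr_n (fun j => poisson l j * (INR j - l) ^ 2) 2),
         ex_series_poisson_variance.
  assert (Emass : ex_series (fun k => poisson l (S k)))
    by apply (ex_series_incr_1 (poisson l)), ex_series_poisson.
  assert (Ha : 0 < / l ^ 2) by apply Rinv_0_lt_compat, pow_lt, Hl.
  assert (Hb : 0 < / l) by apply Rinv_0_lt_compat, Hl.
  eapply Rle_trans.
  - apply Series_le.
    + intros k. split; [apply Rabs_pos|apply (Rabs_poisson_diff2_le l k Hl)].
    + apply ex_series_Rplus; apply ex_series_Rmult_l; assumption.
  - rewrite Series_plus, !Series_scal_l by (apply ex_series_Rmult_l; assumption).
    apply Rle_trans with (/ l ^ 2 * l + / l * 1).
    + apply Rplus_le_compat; apply Rmult_le_compat_l; lra.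
    + right. field. lra.
Qed.

Lemma Rabs_poisson_diff_le_inv l k : 0 < l -> Rabs (poisson_diff l k) <= 2 / l.
Proof.
  intros Hl. eapply Rle_trans; [|apply (Series_Rabs_poisson_diff2_le l Hl)].
  apply (Rabs_le_Series_Rabs_diff (poisson_diff l)).
  - apply ex_series_lim_0, (ex_series_Rle _ (fun j => Rabs (poisson_diff l j))).
    + intros j. apply Rle_refl.
    + apply ex_series_Rabs_poisson_diff. lra.
  - apply ex_series_Rabs_poisson_diff2. lra.
Qed.

(** * The whole-line heat kernel *)

(* [p_t(a)] is the law at [a] of [N - N'] for independent [N, N'] of Poisson law with mean [t/2]. *)
Definition skellam (t : R) (a : nat) : R :=
  Series (fun k => poisson (t / 2) k * poisson (t / 2) (k + a)).

Lemma ex_series_poisson_prod l a : ex_series (fun k => poisson l k * poisson l (k + a)).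
Proof.
  apply (ex_series_geom_bound _ (exp (5 * Rabs l) * exp (5 * Rabs l) * (/ 4) ^ a) (/ 4)); [lra|].
  intros k. apply Rabs_prod_shift_le_geom; [left; apply exp_pos|apply Rabs_poisson_le..].
Qed.

Lemma hk_skellam t x : hk t x = skellam t (Z.abs_nat x).
Proof.
  unfold hk, skellam. set (a := Z.abs_nat x).
  assert (Hterm : forall k, (t / 2) ^ (2 * k + a) / (INR (fact k) * INR (fact (k + a))) =
                            exp t * (poisson (t / 2) k * poisson (t / 2) (k + a))).
  { intros k. unfold poisson.
    replace (2 * k + a)%nat with (k + (k + a))%nat by lia. rewrite pow_add.
    pose proof (INR_fact_lt_0 k). pose proof (INR_fact_lt_0 (k + a)).
    replace (exp t) with (/ (exp (- (t / 2)) * exp (- (t / 2))))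
      by (rewrite <- exp_plus, <- exp_Ropp; f_equal; field).
    field. repeat split; apply Rgt_not_eq; (apply exp_pos || lra). }
  rewrite series_Series.
  - rewrite (Series_ext _ _ Hterm), Series_scal_l, <- Rmult_assoc, <- exp_plus.
    rewrite Rplus_opp_l, exp_0. ring.
  - apply (ex_series_Rext _ _ (fun k => eq_sym (Hterm k))).
    apply ex_series_Rmult_l, ex_series_poisson_prod.
Qed.

Lemma skellam_ge0 t a : 0 <= t -> 0 <= skellam t a.
Proof.
  intros Ht. apply Series_ge0; [apply ex_series_poisson_prod|].
  intros k. apply Rmult_le_pos; apply poisson_ge0; lra.
Qed.

Lemma skellam_le_sup t a B : 0 <= t -> (forall k, poisson (t / 2) k <= B) -> skellam t a <= B.
Proof.
  intros Ht HB. rewrite <- (Rmult_1_r B). eapply Rle_trans; [apply Rle_abs|].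
  apply Rabs_Series_prod_shift_le.
  - intros k. rewrite Rabs_pos_eq by (apply poisson_ge0; lra). apply HB.
  - apply (ex_series_Rext (poisson (t / 2))); [|apply ex_series_poisson].
    intros k. symmetry. apply Rabs_pos_eq, poisson_ge0. lra.
  - right. rewrite <- (Series_poisson (t / 2)). apply Series_ext.
    intros k. apply Rabs_pos_eq, poisson_ge0. lra.
Qed.

Lemma skellam_le_1 t a : 0 <= t -> skellam t a <= 1.
Proof. intros Ht. apply skellam_le_sup; trivial. intros k. apply poisson_le_1. lra. Qed.

Lemma inv_sqrt_half_le u : 0 < u -> / sqrt (u / 2) <= 2 / sqrt u.
Proof.
  intros Hu. rewrite sqrt_div_alt by lra.
  pose proof (sqrt_lt_R0 u Hu). pose proof (sqrt_lt_R0 2 ltac:(lra)).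
  assert (sqrt 2 <= 2) by (rewrite <- (sqrt_square 2) at 2 by lra; apply sqrt_le_1_alt; lra).
  replace (/ (sqrt u / sqrt 2)) with (sqrt 2 / sqrt u) by (field; lra).
  apply Rmult_le_compat_r; [left; apply Rinv_0_lt_compat|]; lra.
Qed.

Lemma skellam_le_inv_sqrt t a : 0 < t -> skellam t a <= 2 / sqrt t.
Proof.
  intros Ht. eapply Rle_trans; [|apply (inv_sqrt_half_le t Ht)].
  apply skellam_le_sup; [lra|]. intros k. apply poisson_le_inv_sqrt. lra.
Qed.

Lemma skellam_diff_eq t b :
  skellam t (S b) - skellam t b =
  Series (fun k => poisson (t / 2) k * poisson_diff (t / 2) (k + b)).
Proof.
  unfold skellam. rewrite <- Series_minus by apply ex_series_poisson_prod.
  apply Series_ext. intros k. unfold poisson_diff.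
  rewrite Nat.add_succ_r. ring.
Qed.

Lemma Rabs_skellam_diff_le t b : 0 <= t -> Rabs (skellam t (S b) - skellam t b) <= 2.
Proof.
  intros Ht. rewrite skellam_diff_eq, <- (Rmult_1_l 2).
  apply Rabs_Series_prod_shift_le.
  - intros k. rewrite Rabs_pos_eq by (apply poisson_ge0; lra). apply poisson_le_1. lra.
  - apply ex_series_Rabs_poisson_diff. lra.
  - apply Series_Rabs_poisson_diff_le_2. lra.
Qed.

Lemma Rabs_skellam_diff_le_inv t b : 0 < t -> Rabs (skellam t (S b) - skellam t b) <= 2 / t.
Proof.
  intros Ht. rewrite skellam_diff_eq.
  replace (2 / t) with (/ sqrt (t / 2) * / sqrt (t / 2))
    by (rewrite <- Rinv_mult, sqrt_sqrt by lra; field; lra).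
  apply Rabs_Series_prod_shift_le.
  - intros k. rewrite Rabs_pos_eq by (apply poisson_ge0; lra). apply poisson_le_inv_sqrt. lra.
  - apply ex_series_Rabs_poisson_diff. lra.
  - apply Series_Rabs_poisson_diff_le. lra.
Qed.

(** * Time derivatives *)

Lemma CVU_Series_M_test (F : nat -> R -> R) (M : nat -> R) c (r : posreal) :
  ex_series M -> (forall n y, Boule c r y -> Rabs (F n y) <= M n) ->
  CVU (fun N y => sum_f_R0 (fun n => F n y) N) (fun y => Series (fun n => F n y)) c r.
Proof.
  intros EM HM e He. pose proof (Series_correct M EM) as HMs. apply is_series_Reals in HMs.
  destruct (HMs e He) as [N0 HN0]. exists N0. intros N y HN Hy.
  assert (Ey : ex_series (fun n => F n y)) by (apply (ex_series_Rle _ M); auto).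
  rewrite (Series_incr_n _ (S N)) by (trivial; lia). simpl pred.
  replace (sum_f_R0 (fun n => F n y) N + Series (fun k => F (S N + k)%nat y)
           - sum_f_R0 (fun n => F n y) N) with (Series (fun k => F (S N + k)%nat y)) by ring.
  eapply Rle_lt_trans.
  - apply (Rabs_Series_le _ (fun k => M (S N + k)%nat)); [auto|apply ex_series_shift, EM].
  - specialize (HN0 N HN). unfold R_dist in HN0.
    rewrite (Series_incr_n M (S N)) in HN0 by (trivial; lia). simpl pred in HN0.
    replace (sum_f_R0 M N - (sum_f_R0 M N + Series (fun k => M (S N + k)%nat)))
      with (- Series (fun k => M (S N + k)%nat)) in HN0 by ring.
    rewrite Rabs_Ropp in HN0. eapply Rle_lt_trans; [apply Rle_abs|exact HN0].
Qed.

Lemma derivable_pt_lim_Series (F F' : nat -> R -> R) :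
  (forall n y, derivable_pt_lim (F n) y (F' n y)) ->
  (forall n y, continuity_pt (F' n) y) ->
  (forall r, 0 < r -> exists M : nat -> R, ex_series M /\
     forall n y, Rabs y < r -> Rabs (F n y) <= M n /\ Rabs (F' n y) <= M n) ->
  forall x, derivable_pt_lim (fun y => Series (fun n => F n y)) x (Series (fun n => F' n x)).
Proof.
  intros HD HC HM x.
  assert (Hr : 0 < Rabs x + 1) by (pose proof (Rabs_pos x); lra).
  destruct (HM _ Hr) as [M [EM HMb]].
  set (ball := mkposreal _ Hr).
  assert (Hball : forall y, Boule 0 ball y -> Rabs y < Rabs x + 1).
  { intros y Hy. unfold Boule in Hy. simpl in Hy. rewrite Rminus_0_r in Hy. exact Hy. }
  assert (Hcvu : CVU (fun N y => sum_f_R0 (fun n => F' n y) N) (fun y => Series (fun n => F' n y))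
                     0 ball).
  { apply (CVU_Series_M_test _ M); trivial. intros n y Hy. apply (HMb n y (Hball y Hy)). }
  apply (derivable_pt_lim_CVU (fun N y => sum_f_R0 (fun n => F n y) N)
           (fun N y => sum_f_R0 (fun n => F' n y) N) _ (fun y => Series (fun n => F' n y))
           x 0 ball).
  - unfold Boule. simpl. rewrite Rminus_0_r. lra.
  - intros y N _. induction N as [|N IH]; simpl; [apply HD|].
    apply (derivable_pt_lim_plus (fun y => sum_f_R0 (fun n => F n y) N) (F (S N))); trivial.
  - intros y Hy. apply is_series_Reals, Series_correct, (ex_series_Rle _ M); trivial.
    intros n. apply (HMb n y (Hball y Hy)).
  - exact Hcvu.
  - apply (CVU_continuity _ _ 0 ball Hcvu). intros N y _.
    induction N as [|N IH]; simpl; [apply HC|].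
    apply (continuity_pt_plus (fun y => sum_f_R0 (fun n => F' n y) N) (F' (S N))); trivial.
Qed.

Definition poisson_prev (l : R) (k : nat) : R :=
  match k with O => 0 | S j => poisson l j end.

Definition poisson_back (l : R) (k : nat) : R := poisson l k - poisson_prev l k.

Lemma derivable_pt_lim_poisson_half k t :
  derivable_pt_lim (fun t => poisson (t / 2) k) t (- poisson_back (t / 2) k / 2).
Proof.
  apply is_derive_Reals. unfold poisson_back, poisson_prev, poisson.
  destruct k as [|k]; auto_derive; trivial.
  - simpl. unfold Rdiv. field.
  - unfold Rdiv. change (match k with 0%nat => 1 | S _ => INR k + 1 end) with (INR (S k)).
    change (fact k + k * fact k)%nat with (fact (S k)).
    rewrite fact_simpl, mult_INR.
    pose proof (INR_fact_lt_0 k). pose proof (lt_0_INR (S k) ltac:(lia)).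
    simpl pow. field. lra.
Qed.

Lemma continuity_pt_poisson_half k t : continuity_pt (fun t => poisson (t / 2) k) t.
Proof. eapply derivable_continuous_pt. eexists. apply derivable_pt_lim_poisson_half. Qed.

Lemma continuity_pt_poisson_back_half k t : continuity_pt (fun t => poisson_back (t / 2) k) t.
Proof.
  unfold poisson_back. apply continuity_pt_minus; [apply continuity_pt_poisson_half|].
  destruct k as [|k]; simpl; [apply continuity_pt_const; intros ? ?; reflexivity|].
  apply continuity_pt_poisson_half.
Qed.

Lemma poisson_back_0 l : poisson_back l 0 = exp (- l).
Proof. unfold poisson_back. simpl. rewrite poisson_0. ring. Qed.

Lemma poisson_back_S l k : poisson_back l (S k) = poisson_diff l k.
Proof. reflexivity. Qed.

Lemma Rabs_poisson_half_le r t k :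
  Rabs t < r -> Rabs (poisson (t / 2) k) <= exp (5 * r) * (/ 4) ^ k.
Proof.
  intros Ht. eapply Rle_trans; [apply Rabs_poisson_le|].
  apply Rmult_le_compat_r; [apply pow_le; lra|]. apply exp_le.
  unfold Rdiv. rewrite Rabs_mult, (Rabs_pos_eq (/ 2)) by lra. pose proof (Rabs_pos t). lra.
Qed.

Lemma Rabs_poisson_prev_half_le r t k :
  Rabs t < r -> Rabs (poisson_prev (t / 2) k) <= 4 * exp (5 * r) * (/ 4) ^ k.
Proof.
  intros Ht. pose proof (exp_pos (5 * r)). destruct k as [|k]; simpl poisson_prev.
  - rewrite Rabs_R0. simpl. lra.
  - eapply Rle_trans; [apply (Rabs_poisson_half_le r t k Ht)|]. right. simpl. field.
Qed.

Lemma Rabs_poisson_back_half_le r t k :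
  Rabs t < r -> Rabs (poisson_back (t / 2) k) <= 5 * exp (5 * r) * (/ 4) ^ k.
Proof.
  intros Ht. unfold poisson_back. eapply Rle_trans; [apply Rabs_minus_le_sum|].
  pose proof (Rabs_poisson_half_le r t k Ht). pose proof (Rabs_poisson_prev_half_le r t k Ht).
  lra.
Qed.

Definition skellam' (t : R) (a : nat) : R :=
  Series (fun k => - (poisson_back (t / 2) k * poisson (t / 2) (k + a)
                      + poisson (t / 2) k * poisson_back (t / 2) (k + a)) / 2).

Lemma skellam_terms_le r t a k : Rabs t < r ->
  Rabs (poisson (t / 2) k * poisson (t / 2) (k + a)) <= 5 * exp (10 * r) * (/ 4) ^ a * (/ 4) ^ k /\
  Rabs (- (poisson_back (t / 2) k * poisson (t / 2) (k + a)
           + poisson (t / 2) k * poisson_back (t / 2) (k + a)) / 2)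
    <= 5 * exp (10 * r) * (/ 4) ^ a * (/ 4) ^ k.
Proof.
  intros Ht. replace (10 * r) with (5 * r + 5 * r) by ring. rewrite exp_plus.
  pose proof (exp_pos (5 * r)) as He.
  assert (H1 := Rabs_prod_shift_le_geom (poisson (t / 2)) (poisson (t / 2)) _ _ k a
                  (Rlt_le _ _ He) (Rabs_poisson_half_le r t k Ht) (Rabs_poisson_half_le r t _ Ht)).
  assert (H2 := Rabs_prod_shift_le_geom (poisson_back (t / 2)) (poisson (t / 2)) _ _ k a
                  (Rlt_le _ _ He) (Rabs_poisson_back_half_le r t k Ht)
                  (Rabs_poisson_half_le r t _ Ht)).
  assert (H3 := Rabs_prod_shift_le_geom (poisson (t / 2)) (poisson_back (t / 2))
                  (exp (5 * r)) (5 * exp (5 * r)) k a ltac:(lra) (Rabs_poisson_half_le r t k Ht)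
                  (Rabs_poisson_back_half_le r t _ Ht)).
  assert (0 <= exp (5 * r) * exp (5 * r) * (/ 4) ^ a * (/ 4) ^ k)
    by (repeat apply Rmult_le_pos; try apply pow_le; lra).
  split; [lra|].
  unfold Rdiv. rewrite Rabs_mult, Rabs_Ropp, Rabs_inv, (Rabs_pos_eq 2) by lra.
  pose proof (Rabs_triang (poisson_back (t / 2) k * poisson (t / 2) (k + a))
                          (poisson (t / 2) k * poisson_back (t / 2) (k + a))).
  lra.
Qed.

Lemma Series_geom_quarter c : Series (fun n => c * (/ 4) ^ n) = c * (4 / 3).
Proof.
  rewrite Series_scal_l. f_equal. apply is_series_unique.
  replace (4 / 3) with (/ (1 - / 4)) by field. apply is_series_geom. rewrite Rabs_pos_eq; lra.
Qed.

Lemma skellam_le_radius r t a : Rabs t < r ->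
  Rabs (skellam t a) <= 7 * exp (10 * r) * (/ 4) ^ a /\
  Rabs (skellam' t a) <= 7 * exp (10 * r) * (/ 4) ^ a.
Proof.
  intros Ht. set (c := 5 * exp (10 * r) * (/ 4) ^ a).
  assert (Hc : 0 <= c)
    by (unfold c; apply Rmult_le_pos; [pose proof (exp_pos (10 * r)); lra|apply pow_le; lra]).
  assert (Hsum : c * (4 / 3) <= 7 * exp (10 * r) * (/ 4) ^ a) by (unfold c in *; lra).
  assert (Egeom : ex_series (fun k => c * (/ 4) ^ k))
    by (apply ex_series_Rmult_l, ex_series_geom; rewrite Rabs_pos_eq; lra).
  split; (eapply Rle_trans; [eapply Rabs_Series_le; [|exact Egeom]|];
           [intros k; apply (skellam_terms_le r t a k Ht)|rewrite Series_geom_quarter; exact Hsum]).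
Qed.

Lemma derivable_pt_lim_skellam a t : derivable_pt_lim (fun t => skellam t a) t (skellam' t a).
Proof.
  apply (derivable_pt_lim_Series (fun k t => poisson (t / 2) k * poisson (t / 2) (k + a))
    (fun k t => - (poisson_back (t / 2) k * poisson (t / 2) (k + a)
                   + poisson (t / 2) k * poisson_back (t / 2) (k + a)) / 2)).
  - intros k y.
    replace (- (poisson_back (y / 2) k * poisson (y / 2) (k + a)
                + poisson (y / 2) k * poisson_back (y / 2) (k + a)) / 2)
      with (- poisson_back (y / 2) k / 2 * poisson (y / 2) (k + a)
            + poisson (y / 2) k * (- poisson_back (y / 2) (k + a) / 2)) by field.
    apply (derivable_pt_lim_mult (fun t => poisson (t / 2) k) (fun t => poisson (t / 2) (k + a)));
      apply derivable_pt_lim_poisson_half.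
  - intros k y. apply continuity_pt_mult; [|apply continuity_pt_const; intros ? ?; reflexivity].
    apply continuity_pt_opp, continuity_pt_plus; apply continuity_pt_mult;
      (apply continuity_pt_poisson_half || apply continuity_pt_poisson_back_half).
  - intros r _. exists (fun k => 5 * exp (10 * r) * (/ 4) ^ a * (/ 4) ^ k). split.
    + apply ex_series_Rmult_l, ex_series_geom. rewrite Rabs_pos_eq; lra.
    + intros k y Hy. apply skellam_terms_le, Hy.
Qed.

Lemma continuity_pt_skellam a t : continuity_pt (fun t => skellam t a) t.
Proof. eapply derivable_continuous_pt. eexists. apply derivable_pt_lim_skellam. Qed.

Section SkellamDerivative.

Variable t : R.

Let l := t / 2.
Let r := Rabs t + 1.
Let Hr : Rabs t < r. Proof. unfold r. lra. Qed.
Let He : 0 <= exp (5 * r). Proof. left. apply exp_pos. Qed.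
Let He4 : 0 <= 4 * exp (5 * r). Proof. lra. Qed.
Let He5 : 0 <= 5 * exp (5 * r). Proof. lra. Qed.

Let ex_qq a : ex_series (fun k => poisson l k * poisson l (k + a)).
Proof.
  apply (ex_series_prod_shift_geom _ _ (exp (5 * r)) _ a He); intros k;
    apply (Rabs_poisson_half_le r t k Hr).
Qed.

Let ex_pp a : ex_series (fun k => poisson_prev l k * poisson_prev l (k + a)).
Proof.
  apply (ex_series_prod_shift_geom _ _ (4 * exp (5 * r)) _ a He4); intros k;
    apply (Rabs_poisson_prev_half_le r t k Hr).
Qed.

Let ex_pq a : ex_series (fun k => poisson_prev l k * poisson l (k + a)).
Proof.
  apply (ex_series_prod_shift_geom _ _ (4 * exp (5 * r)) _ a He); intros k;
    [apply (Rabs_poisson_prev_half_le r t k Hr)|apply (Rabs_poisson_half_le r t k Hr)].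
Qed.

Let ex_qp a : ex_series (fun k => poisson l k * poisson_prev l (k + a)).
Proof.
  apply (ex_series_prod_shift_geom _ _ (exp (5 * r)) _ a He4); intros k;
    [apply (Rabs_poisson_half_le r t k Hr)|apply (Rabs_poisson_prev_half_le r t k Hr)].
Qed.

Let ex_bb a : ex_series (fun k => poisson_back l k * poisson_back l (k + a)).
Proof.
  apply (ex_series_prod_shift_geom _ _ (5 * exp (5 * r)) _ a He5); intros k;
    apply (Rabs_poisson_back_half_le r t k Hr).
Qed.

(* The difference with the defining series is [sum_k (q_k q_(k+a) - q_(k-1) q_(k-1+a))],
   which telescopes to [0]. *)
Lemma skellam'_eq_poisson_back a :
  skellam' t a = - Series (fun k => poisson_back l k * poisson_back l (k + a)) / 2.
Proof.
  unfold skellam'. fold l.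
  rewrite (Series_ext _ (fun k => (- / 2) * (poisson_back l k * poisson_back l (k + a))
             + (- / 2) * (poisson l k * poisson l (k + a)
                          - poisson_prev l k * poisson_prev l (k + a)))).
  2:{ intros k. unfold poisson_back. field. }
  rewrite Series_plus, !Series_scal_l, Series_minus by
    (try apply ex_series_Rmult_l; try apply ex_series_Rminus; trivial).
  rewrite (Series_incr_1 (fun k => poisson_prev l k * poisson_prev l (k + a))) by trivial.
  rewrite (Series_ext (fun k => poisson_prev l (S k) * poisson_prev l (S k + a))
                      (fun k => poisson l k * poisson l (k + a))) by reflexivity.
  simpl poisson_prev at 1. field.
Qed.

Lemma skellam'_eq_laplacian b :
  skellam' t (S b) = (skellam t (S (S b)) + skellam t b - 2 * skellam t (S b)) / 2.
Proof.
  unfold skellam', skellam. fold l.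
  rewrite (Series_ext _ (fun k => / 2 * (poisson_prev l k * poisson l (k + S b))
             + / 2 * (poisson l k * poisson_prev l (k + S b))
             + (-1) * (poisson l k * poisson l (k + S b)))).
  2:{ intros k. unfold poisson_back. field. }
  rewrite !Series_plus, !Series_scal_l by
    (repeat apply ex_series_Rplus; try apply ex_series_Rmult_l; trivial).
  rewrite (Series_incr_1 (fun k => poisson_prev l k * poisson l (k + S b))) by trivial.
  rewrite (Series_ext (fun k => poisson_prev l (S k) * poisson l (S k + S b))
                      (fun k => poisson l k * poisson l (k + S (S b))))
    by (intros k; simpl; rewrite <- !Nat.add_succ_r; reflexivity).
  rewrite (Series_ext (fun k => poisson l k * poisson_prev l (k + S b))
                      (fun k => poisson l k * poisson l (k + b)))
    by (intros k; rewrite Nat.add_succ_r; reflexivity).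
  simpl poisson_prev at 1. field.
Qed.

End SkellamDerivative.

Lemma continuity_pt_skellam'_S b t : continuity_pt (fun t => skellam' t (S b)) t.
Proof.
  apply (continuity_pt_locally_ext
           (fun t => (skellam t (S (S b)) + skellam t b - 2 * skellam t (S b)) / 2) _ 1); [lra| |].
  - intros y _. symmetry. apply skellam'_eq_laplacian.
  - apply continuity_pt_mult; [|apply continuity_pt_const; intros ? ?; reflexivity].
    apply continuity_pt_minus; [apply continuity_pt_plus; apply continuity_pt_skellam|].
    apply continuity_pt_mult; [apply continuity_pt_const; intros ? ?; reflexivity|].
    apply continuity_pt_skellam.
Qed.

Lemma ex_series_Rabs_poisson_back l : 0 <= l -> ex_series (fun k => Rabs (poisson_back l k)).
Proof.
  intros Hl. apply (ex_series_incr_1 (fun k => Rabs (poisson_back l k))).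
  apply ex_series_Rabs_poisson_diff, Hl.
Qed.

Lemma Series_Rabs_poisson_back l : 0 <= l ->
  Series (fun k => Rabs (poisson_back l k)) = exp (- l) + Series (fun k => Rabs (poisson_diff l k)).
Proof.
  intros Hl. rewrite Series_incr_1 by (apply ex_series_Rabs_poisson_back, Hl).
  rewrite poisson_back_0, Rabs_pos_eq by (left; apply exp_pos). reflexivity.
Qed.

Lemma Rabs_poisson_back_le_1 l k : 0 <= l -> Rabs (poisson_back l k) <= 1.
Proof.
  intros Hl. destruct k as [|k].
  - rewrite poisson_back_0, Rabs_pos_eq by (left; apply exp_pos).
    rewrite <- exp_0. apply exp_le. lra.
  - rewrite poisson_back_S. unfold poisson_diff. apply Rabs_le.
    pose proof (poisson_ge0 l k Hl). pose proof (poisson_ge0 l (S k) Hl).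
    pose proof (poisson_le_1 l k Hl). pose proof (poisson_le_1 l (S k) Hl). lra.
Qed.

Lemma exp_opp_le_inv l : 0 <= l -> exp (- l) <= / (1 + l).
Proof. intros Hl. rewrite exp_Ropp. apply Rinv_le_contravar; [lra|apply exp_ineq1_le]. Qed.

Lemma Rabs_poisson_back_le_inv l k : 0 < l -> Rabs (poisson_back l k) <= 2 / l.
Proof.
  intros Hl. destruct k as [|k].
  - rewrite poisson_back_0, Rabs_pos_eq by (left; apply exp_pos).
    eapply Rle_trans; [apply exp_opp_le_inv; lra|].
    apply Rle_trans with (/ l); [apply Rinv_le_contravar; lra|].
    unfold Rdiv. pose proof (Rinv_0_lt_compat l Hl). lra.
  - rewrite poisson_back_S. apply Rabs_poisson_diff_le_inv, Hl.
Qed.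

Lemma Series_Rabs_poisson_back_le_inv_sqrt l : 0 < l ->
  Series (fun k => Rabs (poisson_back l k)) <= 2 / sqrt l.
Proof.
  intros Hl. rewrite Series_Rabs_poisson_back by lra.
  pose proof (Series_Rabs_poisson_diff_le l Hl). pose proof (sqrt_lt_R0 l Hl).
  assert (exp (- l) <= / sqrt l).
  { eapply Rle_trans; [apply exp_opp_le_inv; lra|]. apply Rinv_le_contravar; trivial.
    pose proof (sqrt_sqrt l ltac:(lra)). destruct (Rle_dec (sqrt l) 1); nra. }
  unfold Rdiv. lra.
Qed.

Lemma Rabs_skellam'_le_prod t a B1 B2 : 0 <= t ->
  (forall k, Rabs (poisson_back (t / 2) k) <= B1) ->
  Series (fun k => Rabs (poisson_back (t / 2) k)) <= B2 ->
  Rabs (skellam' t a) <= B1 * B2 / 2.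
Proof.
  intros Ht HB1 HB2. rewrite skellam'_eq_poisson_back.
  unfold Rdiv. rewrite Rabs_mult, Rabs_Ropp, Rabs_inv, (Rabs_pos_eq 2) by lra.
  apply Rmult_le_compat_r; [lra|]. apply Rabs_Series_prod_shift_le; trivial.
  apply ex_series_Rabs_poisson_back. lra.
Qed.

Lemma Rabs_skellam'_le t a : 0 <= t -> Rabs (skellam' t a) <= 2.
Proof.
  intros Ht. eapply Rle_trans.
  - apply (Rabs_skellam'_le_prod t a 1 3 Ht).
    + intros k. apply Rabs_poisson_back_le_1. lra.
    + rewrite Series_Rabs_poisson_back by lra.
      pose proof (Series_Rabs_poisson_diff_le_2 (t / 2) ltac:(lra)).
      assert (exp (- (t / 2)) <= 1) by (rewrite <- exp_0; apply exp_le; lra). lra.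
  - lra.
Qed.

Lemma Rabs_skellam'_le_inv t a : 0 < t -> Rabs (skellam' t a) <= 8 / (t * sqrt t).
Proof.
  intros Ht. eapply Rle_trans.
  - apply (Rabs_skellam'_le_prod t a (2 / (t / 2)) (2 / sqrt (t / 2))); [lra| |].
    + intros k. apply Rabs_poisson_back_le_inv. lra.
    + apply Series_Rabs_poisson_back_le_inv_sqrt. lra.
  - pose proof (inv_sqrt_half_le t Ht). pose proof (sqrt_lt_R0 t Ht).
    pose proof (sqrt_lt_R0 (t / 2) ltac:(lra)).
    replace (2 / (t / 2) * (2 / sqrt (t / 2)) / 2) with (4 / t * / sqrt (t / 2)) by (field; lra).
    replace (8 / (t * sqrt t)) with (4 / t * (2 / sqrt t)) by (field; lra).
    apply Rmult_le_compat_l; trivial. unfold Rdiv.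
    pose proof (Rinv_0_lt_compat t Ht). lra.
Qed.

(** * Hölder continuity in time *)

Lemma Rpower_ge_self x v : 0 < x <= 1 -> 0 <= v <= 1 -> x <= Rpower x v.
Proof.
  intros Hx Hv. unfold Rpower. rewrite <- (exp_ln x) at 1 by lra. apply exp_le.
  assert (Hln : ln x <= ln 1) by (apply ln_le; lra). rewrite ln_1 in Hln. nra.
Qed.

Lemma Rpower_ge_1 x v : 1 <= x -> 0 <= v -> 1 <= Rpower x v.
Proof.
  intros Hx Hv. unfold Rpower. rewrite <- exp_0. apply exp_le.
  assert (Hln : ln 1 <= ln x) by (apply ln_le; lra). rewrite ln_1 in Hln. nra.
Qed.

Lemma le_Rpower_interp K a h v : 0 <= K -> 0 < h -> 0 <= v <= 1 ->
  a <= 2 * K -> a <= K * h -> a <= 2 * K * Rpower h v.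
Proof.
  intros HK Hh Hv H2K HKh. destruct (Rle_dec h 1).
  - pose proof (Rpower_ge_self h v ltac:(lra) Hv). nra.
  - pose proof (Rpower_ge_1 h v ltac:(lra) ltac:(lra)). nra.
Qed.

Lemma min1_pow_eq_1 s v : s <= 1 -> 0 <= v -> min1_pow s v = 1.
Proof.
  intros Hs Hv. unfold min1_pow. destruct (Rle_dec s 0) as [|Hs0%Rnot_le_lt]; trivial.
  apply Rmin_left. unfold Rpower. apply Rle_trans with (exp 0); [rewrite exp_0; lra|apply exp_le].
  assert (Hln : ln s <= ln 1) by (apply ln_le; lra). rewrite ln_1 in Hln. nra.
Qed.

Lemma min1_pow_eq s v : 1 < s -> 0 <= v -> min1_pow s v = Rpower s (- (1 / 2) - v).
Proof.
  intros Hs Hv. unfold min1_pow. destruct (Rle_dec s 0) as [|_]; [lra|].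
  apply Rmin_right. unfold Rpower. apply Rle_trans with (exp 0); [apply exp_le|rewrite exp_0; lra].
  assert (Hln : ln 1 <= ln s) by (apply ln_le; lra). rewrite ln_1 in Hln. nra.
Qed.

Lemma min1_pow_ge0 s v : 0 <= min1_pow s v.
Proof.
  unfold min1_pow. destruct (Rle_dec s 0); [lra|].
  apply Rmin_glb; [lra|left; apply exp_pos].
Qed.

Lemma Rpower_decay_split s h v : 0 < s -> 0 < h ->
  Rpower s (- (1 / 2) - v) * Rpower h v = / sqrt s * Rpower (h / s) v.
Proof.
  intros Hs Hh. rewrite <- Rpower_sqrt, <- Rpower_Ropp by trivial. unfold Rpower.
  rewrite <- !exp_plus. f_equal. unfold Rdiv.
  rewrite ln_mult, ln_Rinv by (try apply Rinv_0_lt_compat; trivial). ring.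
Qed.

Lemma Rabs_diff_le_of_deriv (g g' : R -> R) B s t : s < t ->
  (forall u, s <= u <= t -> derivable_pt_lim g u (g' u)) ->
  (forall u, s <= u <= t -> Rabs (g' u) <= B) -> Rabs (g t - g s) <= B * (t - s).
Proof.
  intros Hst Hd HB. destruct (MVT_cor2 g g' s t Hst Hd) as [c [Hc Hcst]].
  rewrite Hc, Rabs_mult, (Rabs_pos_eq (t - s)) by lra.
  apply Rmult_le_compat_r; [lra|]. apply HB. lra.
Qed.

(* For [s > 1] the two bounds are interpolated in the rescaled increment [(t - s) / s]. *)
Lemma Rabs_diff_le_holder (g g' : R -> R) K s t v :
  0 <= K -> 0 <= s < t -> 0 <= v <= 1 ->
  (forall u, s <= u <= t -> derivable_pt_lim g u (g' u)) ->
  (forall u, s <= u <= t -> Rabs (g u) <= K) ->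
  (forall u, s <= u <= t -> 0 < u -> Rabs (g u) <= K / sqrt u) ->
  (forall u, s <= u <= t -> Rabs (g' u) <= K) ->
  (forall u, s <= u <= t -> 0 < u -> Rabs (g' u) <= K / (u * sqrt u)) ->
  Rabs (g t - g s) <= 2 * K * min1_pow s v * Rpower (t - s) v.
Proof.
  intros HK Hst Hv Hd Hg Hg_decay Hg' Hg'_decay.
  destruct (Rle_dec s 1) as [Hs1|Hs1].
  - rewrite min1_pow_eq_1, Rmult_1_r by lra.
    apply le_Rpower_interp; trivial; [lra| |].
    + eapply Rle_trans; [apply Rabs_minus_le_sum|].
      pose proof (Hg t ltac:(lra)). pose proof (Hg s ltac:(lra)). lra.
    + apply (Rabs_diff_le_of_deriv g g'); trivial; lra.
  - rewrite min1_pow_eq, Rmult_assoc, Rpower_decay_split by lra.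
    pose proof (sqrt_lt_R0 s ltac:(lra)) as Hss.
    assert (HKs : 0 <= K / sqrt s) by (apply Rmult_le_pos; [|left; apply Rinv_0_lt_compat]; lra).
    replace (2 * K * (/ sqrt s * Rpower ((t - s) / s) v))
      with (2 * (K / sqrt s) * Rpower ((t - s) / s) v) by (unfold Rdiv; ring).
    apply le_Rpower_interp; trivial; [apply Rdiv_lt_0_compat; lra| |].
    + eapply Rle_trans; [apply Rabs_minus_le_sum|].
      pose proof (Hg_decay t ltac:(lra) ltac:(lra)). pose proof (Hg_decay s ltac:(lra) ltac:(lra)).
      assert (K / sqrt t <= K / sqrt s).
      { apply Rmult_le_compat_l; trivial. apply Rinv_le_contravar; trivial.
        apply sqrt_le_1_alt. lra. }
      lra.
    + replace (K / sqrt s * ((t - s) / s)) with (K / (s * sqrt s) * (t - s)) by (field; lra).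
      apply (Rabs_diff_le_of_deriv g g'); [lra|trivial|].
      intros u Hu. eapply Rle_trans; [apply Hg'_decay; lra|].
      apply Rmult_le_compat_l; trivial. apply Rinv_le_contravar; [nra|].
      pose proof (sqrt_le_1_alt s u ltac:(lra)). apply Rmult_le_compat; lra.
Qed.

(** * The Robin correction *)

Definition skellam_tail (mu : R) (m : nat) (t : R) : R :=
  Series (fun n => skellam t (m + n) * mu ^ n).

Lemma Rabs_mul_pow_le_half x C mu m n : 0 <= mu <= 2 ->
  Rabs x <= C * (/ 4) ^ (m + n) -> Rabs (x * mu ^ n) <= C * (/ 2) ^ n.
Proof.
  intros Hmu Hx. rewrite Rabs_mult, (Rabs_pos_eq (mu ^ n)) by (apply pow_le; lra).
  rewrite Nat.add_comm, pow_add in Hx.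
  assert (Hm : 0 <= (/ 4) ^ m <= 1)
    by (split; [apply pow_le|rewrite <- (pow1 m); apply pow_incr]; lra).
  assert (Hn : 0 < (/ 4) ^ n) by (apply pow_lt; lra).
  assert (HC : 0 <= C).
  { assert (Hw : 0 < (/ 4) ^ n * (/ 4) ^ m) by (apply Rmult_lt_0_compat; [|apply pow_lt]; lra).
    apply (Rmult_le_reg_r _ _ _ Hw). pose proof (Rabs_pos x). lra. }
  assert (Hpow : (/ 4) ^ n * mu ^ n <= (/ 2) ^ n).
  { rewrite <- Rpow_mult_distr. apply pow_incr. split; [apply Rmult_le_pos|]; lra. }
  assert (0 <= mu ^ n) by (apply pow_le; lra).
  apply Rle_trans with (C * ((/ 4) ^ n * (/ 4) ^ m) * mu ^ n);
    [apply Rmult_le_compat_r; trivial|].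
  apply Rle_trans with (C * ((/ 4) ^ n * mu ^ n)); [|apply Rmult_le_compat_l; trivial].
  assert (0 <= C * ((/ 4) ^ n * mu ^ n)) by (apply Rmult_le_pos; [|apply Rmult_le_pos]; lra).
  nra.
Qed.

Lemma skellam_pow_le_radius r t m n mu : Rabs t < r -> 0 <= mu <= 2 ->
  Rabs (skellam t (m + n) * mu ^ n) <= 7 * exp (10 * r) * (/ 2) ^ n /\
  Rabs (skellam' t (m + n) * mu ^ n) <= 7 * exp (10 * r) * (/ 2) ^ n.
Proof.
  intros Ht Hmu. destruct (skellam_le_radius r t (m + n) Ht) as [H1 H2].
  split; apply (Rabs_mul_pow_le_half _ _ _ m); trivial.
Qed.

Lemma ex_series_skellam_pow t m mu : 0 <= mu <= 2 ->
  ex_series (fun n => skellam t (m + n) * mu ^ n).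
Proof.
  intros Hmu. apply (ex_series_geom_bound _ (7 * exp (10 * (Rabs t + 1))) (/ 2)); [lra|].
  intros n. apply (skellam_pow_le_radius (Rabs t + 1)); trivial. lra.
Qed.

Lemma skellam_tail_ge0 mu m t : 0 <= t -> 0 <= mu <= 2 -> 0 <= skellam_tail mu m t.
Proof.
  intros Ht Hmu. apply Series_ge0; [apply ex_series_skellam_pow, Hmu|].
  intros n. apply Rmult_le_pos; [apply skellam_ge0, Ht|apply pow_le; lra].
Qed.

Lemma skellam_tail_succ mu m t : 0 <= mu <= 2 ->
  skellam_tail mu m t = skellam t m + mu * skellam_tail mu (S m) t.
Proof.
  intros Hmu. unfold skellam_tail.
  rewrite Series_incr_1 by (apply ex_series_skellam_pow, Hmu).
  rewrite <- Series_scal_l, Nat.add_0_r, pow_O, Rmult_1_r. f_equal.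
  apply Series_ext. intros n. rewrite Nat.add_succ_r. simpl. ring.
Qed.

Lemma derivable_pt_lim_skellam_tail mu m t : 0 <= mu <= 2 ->
  derivable_pt_lim (skellam_tail mu (S m)) t (Series (fun n => skellam' t (S m + n) * mu ^ n)).
Proof.
  intros Hmu.
  apply (derivable_pt_lim_Series (fun n t => skellam t (S m + n) * mu ^ n)
                                 (fun n t => skellam' t (S m + n) * mu ^ n)).
  - intros n y. rewrite <- (Rplus_0_r (skellam' y (S m + n) * mu ^ n)),
      <- (Rmult_0_r (skellam y (S m + n))).
    apply (derivable_pt_lim_mult (fun t => skellam t (S m + n)) (fun _ => mu ^ n)).
    + apply derivable_pt_lim_skellam.
    + apply derivable_pt_lim_const.
  - intros n y. apply continuity_pt_mult; [apply continuity_pt_skellam'_S|].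
    apply continuity_pt_const. intros ? ?. reflexivity.
  - intros r _. exists (fun n => 7 * exp (10 * r) * (/ 2) ^ n). split.
    + apply ex_series_Rmult_l, ex_series_geom. rewrite Rabs_pos_eq; lra.
    + intros n y Hy. apply skellam_pow_le_radius; trivial.
Qed.

Lemma skellam_tail'_eq mu m t : 0 < mu <= 2 ->
  2 * Series (fun n => skellam' t (S m + n) * mu ^ n) =
  (mu - 1) ^ 2 / mu * skellam_tail mu (S m) t + skellam t m - skellam t (S m) / mu.
Proof.
  intros Hmu. assert (Hmu' : 0 <= mu <= 2) by lra.
  rewrite (Series_ext _ (fun n => / 2 * (skellam t (S (S m) + n) * mu ^ n)
                                  + / 2 * (skellam t (m + n) * mu ^ n)
                                  + (-1) * (skellam t (S m + n) * mu ^ n))).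
  2:{ intros n. change (S m + n)%nat with (S (m + n)). rewrite skellam'_eq_laplacian.
      change (S (S m) + n)%nat with (S (S (m + n))). field. }
  rewrite !Series_plus, !Series_scal_l by
    (repeat apply ex_series_Rplus; apply ex_series_Rmult_l, ex_series_skellam_pow, Hmu').
  fold (skellam_tail mu (S (S m)) t) (skellam_tail mu m t) (skellam_tail mu (S m) t).
  rewrite (skellam_tail_succ mu m t Hmu'), (skellam_tail_succ mu (S m) t Hmu').
  field. lra.
Qed.

Lemma ex_series_sum_f_R0 (g : nat -> nat -> R) N : (forall b, ex_series (g b)) ->
  ex_series (fun k => sum_f_R0 (fun b => g b k) N).
Proof.
  intros Hg. induction N as [|N IH]; simpl; [apply Hg|]. apply ex_series_Rplus; trivial.
Qed.

Lemma Series_sum_f_R0 (g : nat -> nat -> R) N : (forall b, ex_series (g b)) ->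
  sum_f_R0 (fun b => Series (g b)) N = Series (fun k => sum_f_R0 (fun b => g b k) N).
Proof.
  intros Hg. induction N as [|N IH]; simpl; trivial.
  rewrite Series_plus, IH; trivial. apply ex_series_sum_f_R0, Hg.
Qed.

Lemma skellam_pow_partial_sum_le u nu N : 0 <= u -> 1 <= nu ->
  sum_f_R0 (fun b => skellam u b * nu ^ b) N <=
  Series (fun k => poisson (u / 2) k * (/ nu) ^ k) * Series (fun m => poisson (u / 2) m * nu ^ m).
Proof.
  intros Hu Hnu. set (l := u / 2). assert (Hl : 0 <= l) by (unfold l; lra).
  set (E := Series (fun m => poisson l m * nu ^ m)).
  set (g := fun b k => poisson l k * poisson l (k + b) * nu ^ b).
  assert (Hg : forall b, ex_series (g b)).
  { intros b. apply (ex_series_Rext (fun k => nu ^ b * (poisson l k * poisson l (k + b)))).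
    - intros k. unfold g. ring.
    - apply ex_series_Rmult_l, ex_series_poisson_prod. }
  assert (Hpos : forall m, 0 <= poisson l m * nu ^ m)
    by (intros m; apply Rmult_le_pos; [apply poisson_ge0, Hl|apply pow_le; lra]).
  rewrite (sum_eq _ (fun b => Series (g b))).
  2:{ intros b _. unfold skellam, g. fold l. rewrite <- Series_scal_r. reflexivity. }
  rewrite Series_sum_f_R0 by exact Hg.
  rewrite <- Series_scal_r. apply Series_le.
  2:{ apply (ex_series_Rext (fun k => E * (poisson l k * (/ nu) ^ k))); [intros k; ring|].
      apply ex_series_Rmult_l, ex_series_poisson_pow. }
  intros k. split.
  - apply cond_pos_sum. intros b. unfold g.
    apply Rmult_le_pos; [apply Rmult_le_pos; apply poisson_ge0, Hl|apply pow_le; lra].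
  - replace (sum_f_R0 (fun b => g b k) N)
      with (poisson l k * (/ nu) ^ k * sum_f_R0 (fun b => poisson l (k + b) * nu ^ (k + b)) N).
    2:{ rewrite scal_sum. apply sum_eq. intros b _. unfold g. rewrite pow_add, pow_inv.
        field. apply pow_nonzero. lra. }
    apply Rmult_le_compat_l.
    + apply Rmult_le_pos; [apply poisson_ge0, Hl|apply pow_le].
      left. apply Rinv_0_lt_compat. lra.
    + eapply Rle_trans;
        [apply (partial_sum_le_Series (fun b => poisson l (k + b) * nu ^ (k + b)))|].
      * apply (ex_series_shift (fun m => poisson l m * nu ^ m)), ex_series_poisson_pow.
      * intros b. apply Hpos.
      * apply (Series_shift_le (fun m => poisson l m * nu ^ m)); trivial.
        apply ex_series_poisson_pow.
Qed.

Lemma Series_skellam_pow_le u nu : 0 <= u -> 1 <= nu <= 2 ->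
  Series (fun b => skellam u b * nu ^ b) <= exp (u / 2 * (nu - 1) ^ 2).
Proof.
  intros Hu Hnu. eapply Rle_trans.
  - apply Series_le_of_partial_sums.
    + apply (ex_series_skellam_pow u 0 nu). lra.
    + intros N. apply skellam_pow_partial_sum_le; lra.
  - rewrite !Series_poisson_pow, <- !exp_plus. apply exp_le.
    set (l := u / 2). assert (0 <= l) by (unfold l; lra).
    replace (- l + l * / nu + (- l + l * nu)) with (l * ((nu - 1) ^ 2 * / nu)) by (field; lra).
    apply Rmult_le_compat_l; trivial.
    rewrite <- (Rmult_1_r ((nu - 1) ^ 2)) at 2. apply Rmult_le_compat_l; [apply pow2_ge_0|].
    rewrite <- Rinv_1. apply Rinv_le_contravar; lra.
Qed.

Lemma skellam_tail_le mu m u : 0 <= u -> 0 <= mu <= 2 ->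
  skellam_tail mu m u <= exp (u / 2 * (Rmax 1 mu - 1) ^ 2).
Proof.
  intros Hu Hmu. set (nu := Rmax 1 mu).
  assert (Hnu : 1 <= nu <= 2) by (split; [apply Rmax_l|apply Rmax_lub; lra]).
  assert (Hmunu : mu <= nu) by apply Rmax_r.
  set (f := fun b => skellam u b * nu ^ b).
  assert (Ef : ex_series f) by apply (ex_series_skellam_pow u 0 nu ltac:(lra)).
  assert (Hf : forall b, 0 <= f b)
    by (intros b; apply Rmult_le_pos; [apply skellam_ge0, Hu|apply pow_le; lra]).
  apply Rle_trans with (Series f); [|apply Series_skellam_pow_le; trivial].
  apply Rle_trans with (Series (fun n => f (m + n)%nat)); [|apply Series_shift_le; trivial].
  apply Series_le; [|apply ex_series_shift, Ef].
  intros n. split; [apply Rmult_le_pos; [apply skellam_ge0, Hu|apply pow_le; lra]|].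
  apply Rmult_le_compat_l; [apply skellam_ge0, Hu|].
  apply Rle_trans with (nu ^ n); [apply pow_incr; lra|apply Rle_pow; [lra|lia]].
Qed.

Lemma robin_eq A eps t x y : 0 < muA A eps <= 2 ->
  robin A eps t x y =
  skellam t (Z.abs_nat (Z.of_nat x - Z.of_nat y)) + muA A eps * skellam t (x + y + 1)
  + (muA A eps ^ 2 - 1) * skellam_tail (muA A eps) (x + y + 2) t.
Proof.
  intros Hmu. unfold robin. set (mu := muA A eps) in *. rewrite !hk_skellam.
  replace (Z.abs_nat (Z.of_nat x + Z.of_nat y + 1)) with (x + y + 1)%nat by lia.
  assert (Hterm : forall n, hk t (Z.of_nat x + Z.of_nat y + Z.of_nat (n + 2)) * mu ^ (n + 2)
                            = mu ^ 2 * (skellam t (x + y + 2 + n) * mu ^ n)).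
  { intros n. rewrite hk_skellam, pow_add.
    replace (Z.abs_nat (Z.of_nat x + Z.of_nat y + Z.of_nat (n + 2))) with (x + y + 2 + n)%nat
      by lia.
    ring. }
  rewrite series_Series.
  - rewrite (Series_ext _ _ Hterm), Series_scal_l. fold (skellam_tail mu (x + y + 2) t).
    field. lra.
  - apply (ex_series_Rext _ _ (fun n => eq_sym (Hterm n))).
    apply ex_series_Rmult_l, ex_series_skellam_pow. lra.
Qed.

Definition robin_const (A T : R) : R :=
  let M := exp (T * A ^ 2 / 2) in
  let tau := sqrt T in
  3 * Rabs A *
  ((1 + tau) * M + (1 + tau ^ 3) * (A ^ 2 * M) + (1 + tau) + 2 * (1 + tau ^ 2) * Rabs A).

Lemma scaled_terms_le a N tau e X P sg : 0 <= a -> 0 <= N -> 0 <= sg ->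
  0 <= e <= tau * sg -> 0 <= X <= sg ^ 2 -> 0 <= P <= 2 * sg ->
  e ^ 3 * N + e * X + e ^ 2 * (a * P) <= (tau ^ 3 * N + tau + 2 * a * tau ^ 2) * sg ^ 3.
Proof.
  intros Ha HN Hsg He HX HP.
  assert (E3 : e ^ 3 <= tau ^ 3 * sg ^ 3) by (rewrite <- Rpow_mult_distr; apply pow_incr; lra).
  assert (E2 : e ^ 2 <= tau ^ 2 * sg ^ 2) by (rewrite <- Rpow_mult_distr; apply pow_incr; lra).
  assert (T1 : e ^ 3 * N <= tau ^ 3 * sg ^ 3 * N) by (apply Rmult_le_compat_r; lra).
  assert (T2 : e * X <= tau * sg * sg ^ 2) by (apply Rmult_le_compat; lra).
  assert (T3 : e ^ 2 * (a * P) <= tau ^ 2 * sg ^ 2 * (a * (2 * sg))).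
  { apply Rmult_le_compat; [apply pow2_ge_0|apply Rmult_le_pos; lra|exact E2|].
    apply Rmult_le_compat_l; lra. }
  replace ((tau ^ 3 * N + tau + 2 * a * tau ^ 2) * sg ^ 3)
    with (tau ^ 3 * sg ^ 3 * N + tau * sg * sg ^ 2 + tau ^ 2 * sg ^ 2 * (a * (2 * sg))) by ring.
  lra.
Qed.

Section RobinCorrection.

Variables (A T eps : R) (m : nat).
Hypotheses (Heps : 0 < eps <= 1) (HAeps : Rabs A * eps <= 1 / 2).

Let mu := muA A eps.
Let M := exp (T * A ^ 2 / 2).
Let tau := sqrt T.

Let robin_const_eq : robin_const A T =
  3 * Rabs A *
  ((1 + tau) * M + (1 + tau ^ 3) * (A ^ 2 * M) + (1 + tau) + 2 * (1 + tau ^ 2) * Rabs A).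
Proof. reflexivity. Qed.

Let robin_const_terms_ge0 : 0 <= Rabs A /\ 0 <= M /\ 0 <= tau /\ 0 <= tau * M /\
  0 <= A ^ 2 * M /\ 0 <= tau ^ 2 * Rabs A /\ 0 <= tau ^ 3 * (A ^ 2 * M).
Proof.
  assert (0 <= M) by (left; apply exp_pos). assert (0 <= tau) by apply sqrt_pos.
  pose proof (Rabs_pos A). pose proof (pow2_ge_0 A).
  assert (0 <= A ^ 2 * M) by (apply Rmult_le_pos; lra).
  assert (0 <= tau * M) by (apply Rmult_le_pos; lra).
  assert (0 <= tau ^ 2 * Rabs A) by (apply Rmult_le_pos; [apply pow_le|]; lra).
  assert (0 <= tau ^ 3 * (A ^ 2 * M)) by (apply Rmult_le_pos; [apply pow_le|]; lra).
  repeat (apply conj; [assumption|]). assumption.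
Qed.

Lemma Rabs_muA_sub_1 : Rabs (mu - 1) = Rabs A * eps.
Proof.
  unfold mu, muA. replace (1 - A * eps - 1) with (- (A * eps)) by ring.
  rewrite Rabs_Ropp, Rabs_mult, (Rabs_pos_eq eps); lra.
Qed.

Lemma muA_bounds : 1 / 2 <= mu <= 3 / 2.
Proof. pose proof (Req_le _ _ Rabs_muA_sub_1) as H. apply Rabs_le_between in H. lra. Qed.

Lemma Rabs_muA_sq_sub_1 : Rabs (mu ^ 2 - 1) <= 3 * (Rabs A * eps).
Proof.
  pose proof muA_bounds. pose proof (Rabs_pos A).
  replace (mu ^ 2 - 1) with ((mu - 1) * (mu + 1)) by ring.
  rewrite Rabs_mult, Rabs_muA_sub_1, (Rabs_pos_eq (mu + 1)), (Rmult_comm 3) by lra.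
  apply Rmult_le_compat_l; [apply Rmult_le_pos|]; lra.
Qed.

Lemma time_scale_le u : u <= T / eps ^ 2 -> u * eps ^ 2 <= T.
Proof.
  intros Hu. assert (0 < eps ^ 2) by (apply pow_lt; lra).
  apply (Rmult_le_compat_r (eps ^ 2)) in Hu; [|lra].
  replace (T / eps ^ 2 * eps ^ 2) with T in Hu by (field; lra). exact Hu.
Qed.

Lemma skellam_tail_le_exp u : 0 <= u <= T / eps ^ 2 -> skellam_tail mu (S m) u <= M.
Proof.
  intros Hu. pose proof muA_bounds.
  eapply Rle_trans; [apply skellam_tail_le; lra|]. apply exp_le.
  assert (Hmax : 0 <= Rmax 1 mu - 1 <= Rabs A * eps).
  { rewrite <- Rabs_muA_sub_1. split; [pose proof (Rmax_l 1 mu); lra|].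
    apply Rmax_case_strong; intros; [pose proof (Rabs_pos (mu - 1)); lra|apply Rle_abs]. }
  assert (Hsq : (Rmax 1 mu - 1) ^ 2 <= A ^ 2 * eps ^ 2).
  { rewrite <- pow2_abs with (x := A), <- Rpow_mult_distr. apply pow_incr. exact Hmax. }
  pose proof (time_scale_le u (proj2 Hu)). pose proof (pow2_ge_0 A).
  apply Rle_trans with (u / 2 * (A ^ 2 * eps ^ 2)); [apply Rmult_le_compat_l; lra|].
  replace (u / 2 * (A ^ 2 * eps ^ 2)) with (u * eps ^ 2 * A ^ 2 / 2) by field.
  apply Rmult_le_compat_r; [lra|]. apply Rmult_le_compat_r; lra.
Qed.

Lemma eps_le_inv_sqrt u : 0 < u <= T / eps ^ 2 -> eps <= tau / sqrt u.
Proof.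
  intros Hu. pose proof (sqrt_lt_R0 u (proj1 Hu)).
  pose proof (sqrt_le_1_alt _ _ (time_scale_le u (proj2 Hu))) as Hs.
  rewrite sqrt_mult_alt, sqrt_pow2 in Hs by (try apply pow_le; lra).
  apply (Rmult_le_reg_r (sqrt u)); trivial. unfold tau. field_simplify; lra.
Qed.

Lemma Rabs_skellam_tail'_le u : 0 <= u <= T / eps ^ 2 ->
  Rabs (Series (fun n => skellam' u (S m + n) * mu ^ n)) <=
  A ^ 2 * eps ^ 2 * M + Rabs (skellam u (S m) - skellam u m) / 2 + Rabs A * eps * skellam u (S m).
Proof.
  intros Hu. pose proof muA_bounds. pose proof (Rabs_pos A).
  set (G := skellam_tail mu (S m) u). set (D := skellam u (S m) - skellam u m).
  assert (HG : 0 <= G <= M)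
    by (split; [apply skellam_tail_ge0; lra|apply skellam_tail_le_exp, Hu]).
  assert (HP : 0 <= skellam u (S m)) by (apply skellam_ge0; lra).
  assert (E : Series (fun n => skellam' u (S m + n) * mu ^ n) =
              (mu - 1) ^ 2 / mu * G / 2 - D / 2 + (mu - 1) / mu * skellam u (S m) / 2).
  { apply (Rmult_eq_reg_l 2); [|lra]. rewrite skellam_tail'_eq by lra.
    unfold G, D. field. lra. }
  assert (Hsq : (mu - 1) ^ 2 = A ^ 2 * eps ^ 2)
    by (rewrite <- pow2_abs, Rabs_muA_sub_1, <- (pow2_abs A); ring).
  assert (Hinv : 0 < / mu <= 2).
  { split; [apply Rinv_0_lt_compat; lra|].
    replace 2 with (/ (1 / 2)) by field. apply Rinv_le_contravar; lra. }
  rewrite E. unfold Rdiv. eapply Rle_trans; [apply Rabs_triang|].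
  apply Rplus_le_compat; [eapply Rle_trans; [apply Rabs_minus_le_sum|]; apply Rplus_le_compat|].
  - assert (0 <= A ^ 2 * eps ^ 2) by (apply Rmult_le_pos; apply pow2_ge_0).
    rewrite Hsq, Rabs_pos_eq by (repeat (apply pow2_ge_0 || apply Rmult_le_pos); lra).
    apply Rle_trans with (A ^ 2 * eps ^ 2 * 2 * M * / 2); [|right; field].
    apply Rmult_le_compat_r; [lra|].
    apply Rmult_le_compat; [apply Rmult_le_pos; lra|lra|apply Rmult_le_compat_l; lra|apply HG].
  - rewrite Rabs_mult, (Rabs_pos_eq (/ 2)) by lra. right. reflexivity.
  - assert (0 <= Rabs A * eps) by (apply Rmult_le_pos; lra).
    rewrite !Rabs_mult, Rabs_muA_sub_1, (Rabs_pos_eq (/ mu)), (Rabs_pos_eq (skellam u (S m))),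
      (Rabs_pos_eq (/ 2)) by lra.
    apply Rle_trans with (Rabs A * eps * 2 * skellam u (S m) * / 2); [|right; field].
    apply Rmult_le_compat_r; [lra|]. apply Rmult_le_compat_r; [lra|].
    apply Rmult_le_compat_l; lra.
Qed.

Let G u := skellam_tail mu (S m) u.
Let G' u := Series (fun n => skellam' u (S m + n) * mu ^ n).

Lemma Rabs_robin_correction_le u : 0 <= u <= T / eps ^ 2 ->
  Rabs ((mu ^ 2 - 1) * G u) <= 3 * Rabs A * (eps * M).
Proof.
  intros Hu. pose proof muA_bounds.
  assert (HG : 0 <= G u <= M)
    by (split; [apply skellam_tail_ge0; lra|apply skellam_tail_le_exp, Hu]).
  rewrite Rabs_mult, (Rabs_pos_eq (G u)) by lra.
  replace (3 * Rabs A * (eps * M)) with (3 * (Rabs A * eps) * M) by ring.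
  apply Rmult_le_compat; [apply Rabs_pos|lra|apply Rabs_muA_sq_sub_1|lra].
Qed.

Lemma Rabs_robin_correction'_le u : 0 <= u <= T / eps ^ 2 ->
  Rabs ((mu ^ 2 - 1) * G' u) <=
  3 * Rabs A * (eps ^ 3 * (A ^ 2 * M) + eps * (Rabs (skellam u (S m) - skellam u m) / 2)
                + eps ^ 2 * (Rabs A * skellam u (S m))).
Proof.
  intros Hu. rewrite Rabs_mult.
  replace (3 * Rabs A * (eps ^ 3 * (A ^ 2 * M) + eps * (Rabs (skellam u (S m) - skellam u m) / 2)
                + eps ^ 2 * (Rabs A * skellam u (S m))))
    with (3 * (Rabs A * eps) * (A ^ 2 * eps ^ 2 * M + Rabs (skellam u (S m) - skellam u m) / 2
                + Rabs A * eps * skellam u (S m))) by ring.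
  apply Rmult_le_compat; [apply Rabs_pos|apply Rabs_pos|apply Rabs_muA_sq_sub_1|].
  apply Rabs_skellam_tail'_le, Hu.
Qed.

Lemma Rabs_robin_correction_le_const u : 0 <= u <= T / eps ^ 2 ->
  Rabs ((mu ^ 2 - 1) * G u) <= robin_const A T.
Proof.
  intros Hu. pose proof robin_const_terms_ge0.
  eapply Rle_trans; [apply Rabs_robin_correction_le, Hu|].
  rewrite robin_const_eq. apply Rmult_le_compat_l; [lra|].
  assert (eps * M <= 1 * M) by (apply Rmult_le_compat_r; lra). lra.
Qed.

Lemma Rabs_robin_correction_le_decay u : 0 < u <= T / eps ^ 2 ->
  Rabs ((mu ^ 2 - 1) * G u) <= robin_const A T / sqrt u.
Proof.
  intros Hu. pose proof robin_const_terms_ge0.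
  pose proof (eps_le_inv_sqrt u Hu). pose proof (Rinv_0_lt_compat _ (sqrt_lt_R0 u (proj1 Hu))).
  eapply Rle_trans; [apply Rabs_robin_correction_le; lra|].
  rewrite robin_const_eq. unfold Rdiv in H0 |- *. rewrite (Rmult_assoc (3 * Rabs A)).
  apply Rmult_le_compat_l; [lra|].
  apply Rle_trans with (tau * M * / sqrt u).
  - replace (tau * M * / sqrt u) with (tau * / sqrt u * M) by ring.
    apply Rmult_le_compat_r; lra.
  - apply Rmult_le_compat_r; lra.
Qed.

Lemma Rabs_robin_correction'_le_const u : 0 <= u <= T / eps ^ 2 ->
  Rabs ((mu ^ 2 - 1) * G' u) <= robin_const A T.
Proof.
  intros Hu. pose proof robin_const_terms_ge0.
  eapply Rle_trans; [apply Rabs_robin_correction'_le, Hu|].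
  rewrite robin_const_eq. apply Rmult_le_compat_l; [lra|].
  pose proof (Rabs_skellam_diff_le u m (proj1 Hu)).
  pose proof (Rabs_pos (skellam u (S m) - skellam u m)).
  pose proof (skellam_ge0 u (S m) (proj1 Hu)). pose proof (skellam_le_1 u (S m) (proj1 Hu)).
  pose proof (scaled_terms_le (Rabs A) (A ^ 2 * M) 1 eps
                (Rabs (skellam u (S m) - skellam u m) / 2) (skellam u (S m)) 1) as Hterms.
  assert (eps ^ 3 * (A ^ 2 * M) + eps * (Rabs (skellam u (S m) - skellam u m) / 2)
          + eps ^ 2 * (Rabs A * skellam u (S m)) <= A ^ 2 * M + 1 + 2 * Rabs A).
  { eapply Rle_trans; [apply Hterms; rewrite ?pow1; lra|]. right. ring. }
  lra.
Qed.

Lemma Rabs_robin_correction'_le_decay u : 0 < u <= T / eps ^ 2 ->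
  Rabs ((mu ^ 2 - 1) * G' u) <= robin_const A T / (u * sqrt u).
Proof.
  intros Hu. pose proof robin_const_terms_ge0. pose proof (sqrt_lt_R0 u (proj1 Hu)).
  set (sg := / sqrt u). assert (Hsg : 0 < sg) by (apply Rinv_0_lt_compat; lra).
  assert (Hsg3 : / (u * sqrt u) = sg ^ 3)
    by (unfold sg; rewrite <- (sqrt_sqrt u) at 1 by lra; field; lra).
  assert (Hsg2 : / u = sg ^ 2) by (unfold sg; rewrite pow_inv, pow2_sqrt; lra).
  pose proof (eps_le_inv_sqrt u Hu) as He.
  pose proof (Rabs_skellam_diff_le_inv u m (proj1 Hu)) as HD.
  pose proof (skellam_le_inv_sqrt u (S m) (proj1 Hu)) as HP.
  unfold Rdiv in He, HD, HP. fold sg in He, HP. rewrite Hsg2 in HD.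
  pose proof (Rabs_pos (skellam u (S m) - skellam u m)).
  pose proof (skellam_ge0 u (S m) ltac:(lra)).
  eapply Rle_trans; [apply Rabs_robin_correction'_le; lra|].
  rewrite robin_const_eq. unfold Rdiv. rewrite Hsg3, (Rmult_assoc (3 * Rabs A)).
  apply Rmult_le_compat_l; [lra|].
  eapply Rle_trans; [apply (scaled_terms_le _ _ tau _ _ _ sg); lra|].
  apply Rmult_le_compat_r; [apply pow_le; lra|lra].
Qed.

Lemma Rabs_robin_correction_diff_le s t v :
  0 <= s < t -> t <= T / eps ^ 2 -> 0 <= v <= 1 ->
  Rabs ((mu ^ 2 - 1) * G t - (mu ^ 2 - 1) * G s) <=
  2 * robin_const A T * min1_pow s v * Rpower (t - s) v.
Proof.
  intros Hst HtT Hv. pose proof robin_const_terms_ge0.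
  assert (Hdom : forall u, s <= u <= t -> 0 <= u <= T / eps ^ 2) by (intros u Hu; lra).
  apply (Rabs_diff_le_holder (fun u => (mu ^ 2 - 1) * G u) (fun u => (mu ^ 2 - 1) * G' u));
    trivial.
  - rewrite robin_const_eq. apply Rmult_le_pos; lra.
  - intros u _. apply derivable_pt_lim_scal, derivable_pt_lim_skellam_tail.
    pose proof muA_bounds. lra.
  - intros u Hu. apply Rabs_robin_correction_le_const, Hdom, Hu.
  - intros u Hu Hu0. apply Rabs_robin_correction_le_decay. pose proof (Hdom u Hu). lra.
  - intros u Hu. apply Rabs_robin_correction'_le_const, Hdom, Hu.
  - intros u Hu Hu0. apply Rabs_robin_correction'_le_decay. pose proof (Hdom u Hu). lra.
Qed.

End RobinCorrection.

Lemma Rabs_skellam_diff_holder a s t v : 0 <= s < t -> 0 <= v <= 1 ->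
  Rabs (skellam t a - skellam s a) <= 16 * min1_pow s v * Rpower (t - s) v.
Proof.
  intros Hst Hv. replace 16 with (2 * 8) by ring.
  apply (Rabs_diff_le_holder (fun u => skellam u a) (fun u => skellam' u a)); trivial; try lra.
  - intros u _. apply derivable_pt_lim_skellam.
  - intros u Hu. rewrite Rabs_pos_eq by (apply skellam_ge0; lra).
    pose proof (skellam_le_1 u a ltac:(lra)). lra.
  - intros u _ Hu. rewrite Rabs_pos_eq by (apply skellam_ge0; lra).
    eapply Rle_trans; [apply skellam_le_inv_sqrt, Hu|].
    apply Rmult_le_compat_r; [left; apply Rinv_0_lt_compat, sqrt_lt_R0, Hu|lra].
  - intros u Hu. pose proof (Rabs_skellam'_le u a ltac:(lra)). lra.
  - intros u _ Hu. eapply Rle_trans; [apply Rabs_skellam'_le_inv, Hu|]. right. reflexivity.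
Qed.

Lemma Rabs_robin_diff_le A T eps s t x y v :
  0 < eps <= 1 -> Rabs A * eps <= 1 / 2 -> 0 <= s < t -> t <= T / eps ^ 2 -> 0 <= v <= 1 ->
  Rabs (robin A eps t x y - robin A eps s x y)
    <= (40 + 2 * robin_const A T) * min1_pow s v * Rpower (t - s) v.
Proof.
  intros Heps HAeps Hst HtT Hv. pose proof (muA_bounds A eps Heps HAeps) as Hmu.
  rewrite !robin_eq by lra. replace (x + y + 2)%nat with (S (x + y + 1)) by lia.
  pose proof (Rabs_skellam_diff_holder (Z.abs_nat (Z.of_nat x - Z.of_nat y)) s t v Hst Hv)
    as Hdiag.
  pose proof (Rabs_skellam_diff_holder (x + y + 1) s t v Hst Hv) as Hrefl.
  pose proof (Rabs_robin_correction_diff_le A T eps (x + y + 1) Heps HAeps s t v Hst HtT Hv)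
    as Hcorr.
  rewrite Rmult_assoc in Hdiag, Hrefl, Hcorr |- *.
  set (mu := muA A eps) in *. set (w := min1_pow s v * Rpower (t - s) v) in *.
  assert (Hw : 0 <= w) by (apply Rmult_le_pos; [apply min1_pow_ge0|left; apply exp_pos]).
  match goal with |- Rabs (?a + ?b * ?c + ?d - (?a' + ?b' * ?c' + ?d')) <= _ =>
    replace (a + b * c + d - (a' + b' * c' + d')) with ((a - a') + mu * (c - c') + (d - d'))
      by ring end.
  eapply Rle_trans; [apply Rabs_triang|]. eapply Rle_trans; [apply Rplus_le_compat_r, Rabs_triang|].
  rewrite Rabs_mult, (Rabs_pos_eq mu) by lra.
  assert (mu * Rabs (skellam t (x + y + 1) - skellam s (x + y + 1)) <= 3 / 2 * (16 * w))
    by (apply Rmult_le_compat; [lra|apply Rabs_pos|lra|exact Hrefl]).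
  lra.
Qed.

Theorem mainTheorem6 :
  forall (A T : R), 0 < T ->
  exists C : R, exists eps0 : R, 0 < eps0 /\
    forall eps : R, 0 < eps < eps0 ->
    forall s t : R, 0 <= s -> s < t -> t <= T / eps ^ 2 ->
    forall x y : nat, forall v : R, 0 <= v <= 1 ->
      Rabs (robin A eps t x y - robin A eps s x y)
        <= C * min1_pow s v * Rpower (t - s) v.
Proof.
  intros A T _. pose proof (Rabs_pos A) as HA.
  exists (40 + 2 * robin_const A T), (/ (2 * (Rabs A + 1))).
  split; [apply Rinv_0_lt_compat; lra|].
  intros eps [Heps Heps0] s t Hs Hst HtT x y v Hv.
  apply (Rmult_lt_compat_r (2 * (Rabs A + 1))) in Heps0; [|lra].
  rewrite Rinv_l in Heps0 by lra.
  apply Rabs_robin_diff_le; try split; trivial; nra.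
Qed.
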